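(* Let $G$ be a disconnected $(n,n-1)$-graph with $10\le n\le 13$ and girth $g(G)\ge 9$. Then $G$ is $4$-placeable.
   Context: All graphs are finite and simple. A $(p,q)$-graph is a graph with $p$ vertices and $q$ edges. The girth $g(G)$ is the length of a shortest cycle of $G$ (such a $G$ necessarily contains a cycle). For a graph $G$ on $n$ vertices and a positive integer $k$, a $k$-placement of $G$ is a $k$-tuple $(\phi_1,\dots,\phi_k)$ of bijections $\phi_i:V(G)\to V(K_n)$ such that the edge sets $\phi_i(E(G))=\{\phi_i(x)\phi_i(y): xy\in E(G)\}$ are pairwise disjoint; $G$ is $k$-placeable if it has a $k$-placement. *)

From mathcomp Require Import all_boot.
Set Implicit Arguments. Unset Strict Implicit. Unset Printing Implicit Defensive.

Definition simple_graph (T : finType) (e : rel T) : Prop :=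
  symmetric e /\ irreflexive e.

Definition edge_set (T : finType) (e : rel T) : {set {set T}} :=
  [set [set x; y] | x in T, y in T & e x y].

Definition connected_graph (T : finType) (e : rel T) : Prop :=
  forall x y : T, connect e x y.

Definition is_cycle (T : finType) (e : rel T) (s : seq T) : bool :=
  [&& uniq s, 3 <= size s & cycle e s].

Definition girth_ge (T : finType) (e : rel T) (k : nat) : Prop :=
  (exists s, is_cycle e s) /\ (forall s, is_cycle e s -> k <= size s).

Definition image_edges (T : finType) (e : rel T) (n : nat) (f : T -> 'I_n)
  : {set {set 'I_n}} :=
  [set [set f x; f y] | x in T, y in T & e x y].

Definition placeable (T : finType) (e : rel T) (k : nat) : Prop :=
  exists phi : 'I_k -> T -> 'I_#|T|,
    (forall i, bijective (phi i)) /\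
    (forall i j, i != j -> [disjoint image_edges e (phi i) & image_edges e (phi j)]).

From mathcomp Require Import all_boot zify.
Set Implicit Arguments. Unset Strict Implicit. Unset Printing Implicit Defensive.

(* A girth >= 9 graph G with n vertices and n - 1 edges contains a cycle C of
   some length L with 9 <= L < n.  Numbering the vertices so that C becomes
   0, 1, ..., L - 1 turns G into the cycle C_L plus n - 1 - L further edges
   ("chords") of K_n.  For each of the ten pairs (n, L) we store a list of
   triples of permutations of {0, ..., n - 1}; a computation checks that for
   every choice of the n - 1 - L chords one of these triples, together with the
   identity, sends the n - 1 edges to 4(n - 1) pairwise distinct edges of K_n. *)

Lemma uniq_map_inj_in (T1 T2 : eqType) (f : T1 -> T2) (s : seq T1) :
  uniq (map f s) -> {in s &, injective f}.
Proof.
elim: s => [|x s IHs] /=; first by move=> _ y z; rewrite in_nil.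
case/andP=> fx_notin /IHs inj_s y z; rewrite !inE.
case/predU1P=> [->|ys] /predU1P[->|zs] //.
- by move=> fxz; case/negP: fx_notin; rewrite fxz map_f.
- by move=> fyx; case/negP: fx_notin; rewrite -fyx map_f.
- exact: inj_s.
Qed.

Definition upair (a b : nat) : nat * nat := if a <= b then (a, b) else (b, a).

Lemma upairC a b : upair a b = upair b a.
Proof. by rewrite /upair; case: ltngtP => // ->. Qed.

Lemma set2_eq (T : finType) (u v u' v' : T) :
  [set u; v] = [set u'; v'] -> (u = u' /\ v = v') \/ (u = v' /\ v = u').
Proof.
move=> uv; have mem w : (w \in [set u; v]) = (w \in [set u'; v']) by rewrite uv.
have := mem u; rewrite set21 => /esym/set2P[eu|eu];
have := mem v; rewrite set22 => /esym/set2P[ev|ev]; subst.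
- by have := mem v'; rewrite set22 => /set2P[->|->]; left.
- by left.
- by right.
- by have := mem u'; rewrite set21 => /set2P[->|->]; left.
Qed.

Lemma upair_set2 (T : finType) (f : T -> nat) (u v u' v' : T) :
  [set u; v] = [set u'; v'] -> upair (f u) (f v) = upair (f u') (f v').
Proof. by case/set2_eq => -[-> ->]; rewrite // upairC. Qed.

Definition relabel (p : seq nat) (ab : nat * nat) : nat * nat :=
  upair (nth 0 p ab.1) (nth 0 p ab.2).

Lemma relabel_upair p a b : relabel p (upair a b) = upair (nth 0 p a) (nth 0 p b).
Proof. by rewrite /upair; case: leqP => _; rewrite /relabel //= upairC. Qed.

Definition edge_images (ps : seq (seq nat)) (ab : nat * nat) : seq (nat * nat) :=
  [seq relabel (nth [::] ps i) ab | i <- iota 0 (size ps)].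

(* [images ps E] is duplicate-free iff every permutation of [ps] is injective on
   the edges E and the images of E under different permutations are disjoint. *)
Definition images (ps : seq (seq nat)) (E : seq (nat * nat)) : seq (nat * nat) :=
  [seq relabel (nth [::] ps i) ab | ab <- E, i <- iota 0 (size ps)].

Lemma images_cons ps ab E : images ps (ab :: E) = edge_images ps ab ++ images ps E.
Proof. by []. Qed.

Lemma images_cat ps E1 E2 : images ps (E1 ++ E2) = images ps E1 ++ images ps E2.
Proof. by rewrite /images map_cat flatten_cat. Qed.

Lemma images_uniq_relabel_neq ps E a b i j :
  uniq (images ps E) -> a \in E -> b \in E -> i < size ps -> j < size ps -> i != j ->
  relabel (nth [::] ps i) a != relabel (nth [::] ps j) b.
Proof.
have -> : images ps E = map (fun q => relabel (nth [::] ps q.2) q.1)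
                          [seq (x, k) | x <- E, k <- iota 0 (size ps)].
  by rewrite map_allpairs.
move=> /uniq_map_inj_in inj_images aE bE ips jps; apply: contraNneq => eq_img.
have mem_pairs x k : x \in E -> k < size ps ->
    (x, k) \in [seq (y, l) | y <- E, l <- iota 0 (size ps)].
  by move=> xE kps; apply/allpairsP; exists (x, k); rewrite /= mem_iota add0n kps.
by have [_ ->] := inj_images _ _ (mem_pairs _ _ aE ips) (mem_pairs _ _ bE jps) eq_img.
Qed.

(** * The certificate checker *)

Definition cycle_edges (L : nat) : seq (nat * nat) :=
  (0, L.-1) :: [seq (j, j.+1) | j <- iota 0 L.-1].

Definition label_pairs (N : nat) : seq (nat * nat) :=
  [seq (a, b) | a <- iota 0 N, b <- iota 0 N].

Definition chords (N L : nat) : seq (nat * nat) :=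
  [seq ab <- label_pairs N | (ab.1 < ab.2) && (ab \notin cycle_edges L)].

Lemma mem_label_pairs N a b : ((a, b) \in label_pairs N) = (a < N) && (b < N).
Proof.
apply/allpairsP/andP => [[[x y] [xN yN [-> ->]]]|[aN bN]].
  by move: xN yN; rewrite !mem_iota.
by exists (a, b); rewrite !mem_iota.
Qed.

Lemma label_pairs_uniq N : uniq (label_pairs N).
Proof. by apply: allpairs_uniq; rewrite ?iota_uniq // => -[? ?] [? ?]. Qed.

Lemma size_cycle_edges L : 0 < L -> size (cycle_edges L) = L.
Proof. by move=> L_gt0; rewrite /= size_map size_iota prednK. Qed.

Lemma cycle_edges_uniq L : 2 < L -> uniq (cycle_edges L).
Proof.
move=> L_gt2; rewrite /= map_inj_uniq ?iota_uniq => [|j k [] //]; rewrite andbT.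
by apply/mapP => -[j _ [<- jL]]; lia.
Qed.

(* A search state consists of a candidate placement, one row per chord still to
   be decided (its images, and whether they are distinct and avoid the images of
   the fixed edges), and the images of the chords placed so far. *)
Definition state := (seq (seq nat) * seq (seq (nat * nat) * bool) * seq (nat * nat))%type.

Definition placement (st : state) : seq (seq nat) := st.1.1.
Definition rows (st : state) : seq (seq (nat * nat) * bool) := st.1.2.
Definition used (st : state) : seq (nat * nat) := st.2.

Definition chord_row (fixed : seq (nat * nat)) (ps : seq (seq nat)) (ab : nat * nat) :=
  let I := edge_images ps ab in (I, uniq I && all (fun z => z \notin fixed) I).

Definition head_row (st : state) : seq (nat * nat) * bool := head ([::], false) (rows st).

Definition fits (st : state) : bool :=
  (head_row st).2 && all (fun z => z \notin used st) (head_row st).1.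

Definition skip (st : state) : state := (placement st, behead (rows st), used st).

Definition take (st : state) : state :=
  (placement st, behead (rows st), (head_row st).1 ++ used st).

(* Subsequences with a common prefix share the filtering of the states; the last
   chord is handled by [has], so that the search stops at the first fit. *)
Fixpoint covers (k : nat) (l : seq (nat * nat)) (sts : seq state) : bool :=
  match k, l with
  | 0, _ => sts != [::]
  | _.+1, [::] => true
  | 1, _ :: l' => has fits sts && covers 1 l' (map skip sts)
  | k'.+1, _ :: l' =>
      covers k' l' [seq take st | st <- sts & fits st] && covers k l' (map skip sts)
  end.

Lemma covers0 l sts : covers 0 l sts = (sts != [::]).
Proof. by case: l. Qed.

Lemma covers_cons k ab l sts :
  covers k.+1 (ab :: l) sts =
  covers k l [seq take st | st <- sts & fits st] && covers k.+1 l (map skip sts).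
Proof.
case: k => [|k] //=; rewrite covers0 has_filter.
by case: [seq st <- sts | fits st].
Qed.

Section CoversSpec.

Variable fixed : seq (seq nat) -> seq (nat * nat).

Definition aligned (l : seq (nat * nat)) (st : state) : bool :=
  (rows st == [seq chord_row (fixed (placement st)) (placement st) ab | ab <- l]) &&
  uniq (fixed (placement st) ++ used st).

Lemma aligned_skip ab l st : aligned (ab :: l) st -> aligned l (skip st).
Proof.
case: st => [[ps r] u]; rewrite /aligned /skip /placement /rows /used /=.
by case/andP=> /eqP-> ->; rewrite eqxx.
Qed.

Lemma aligned_take ab l st : aligned (ab :: l) st -> fits st ->
  aligned l (take st) /\ (head_row st).1 = edge_images (placement st) ab.
Proof.
case: st => [[ps r] u]; rewrite /aligned /fits /take /head_row /placement /rows /used /=.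
case/andP=> /eqP-> uniq_st /andP[/andP[uniq_ab /allP fixed_ab] /allP used_ab].
split=> //; rewrite eqxx /= uniq_catCA cat_uniq uniq_ab uniq_st andbT.
apply/hasPn => z z_rest; apply/negP => z_ab; move: z_rest; rewrite mem_cat.
by rewrite (negbTE (fixed_ab z z_ab)) (negbTE (used_ab z z_ab)).
Qed.

Lemma coversP k l sts :
  covers k l sts -> all (aligned l) sts ->
  forall c, subseq c l -> size c = k ->
  exists2 st, st \in sts & uniq (fixed (placement st) ++ images (placement st) c ++ used st).
Proof.
have base l' sts' : sts' != [::] -> all (aligned l') sts' ->
    exists2 st, st \in sts' & uniq (fixed (placement st) ++ images (placement st) [::] ++ used st).
  by case: sts' => // st0 sts' _ /andP[/andP[_ uniq_st] _]; exists st0; rewrite ?mem_head.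
elim: l k sts => [|ab l IHl] [|k] sts cov all_al c sub_c size_c.
- by rewrite (size0nil size_c); apply: base cov all_al.
- by case: c sub_c size_c.
- by rewrite (size0nil size_c); apply: base cov all_al.
move: cov; rewrite covers_cons => /andP[cov_take cov_skip].
case: c sub_c size_c => // y c /=.
case: eqP => [-> sub_c [size_c] | _ sub_c size_c]; last first.
  have all_skip : all (aligned l) (map skip sts).
    by rewrite all_map; apply/allP => st /(allP all_al) /aligned_skip.
  have [_ /mapP[st st_sts ->]] := IHl _ _ cov_skip all_skip (y :: c) sub_c size_c.
  by exists st.
have all_take : all (aligned l) [seq take st | st <- sts & fits st].
  rewrite all_map; apply/allP => st; rewrite mem_filter => /andP[fit_st st_sts].
  by have [] := aligned_take (allP all_al st st_sts) fit_st.
have [_ /mapP[st + ->] uniq_c] := IHl _ _ cov_take all_take c sub_c size_c.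
rewrite mem_filter => /andP[fit_st st_sts]; exists st => //.
have [_ head_st] := aligned_take (allP all_al st st_sts) fit_st.
rewrite images_cons -catA uniq_catCA.
move: uniq_c; rewrite /take /used /placement /= head_st.
by rewrite catA uniq_catCA -catA.
Qed.

End CoversSpec.

Definition placement_ok (N : nat) (ps : seq (seq nat)) : bool :=
  (size ps == 4) && all (perm_eq^~ (iota 0 N)) ps.

(* Each witness lists the last three permutations; the first one is the identity. *)
Definition witness_placement (N : nat) (qs : seq (seq nat)) : seq (seq nat) :=
  iota 0 N :: qs.

Definition cycle_images (L : nat) (ps : seq (seq nat)) : seq (nat * nat) :=
  images ps (cycle_edges L).

Definition start_state (N L : nat) (qs : seq (seq nat)) : state :=
  let ps := witness_placement N qs in
  (ps, [seq chord_row (cycle_images L ps) ps ab | ab <- chords N L], [::]).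

Definition certified (N L : nat) (wit : seq (seq (seq nat))) : bool :=
  all (fun qs => placement_ok N (witness_placement N qs) &&
                 uniq (cycle_images L (witness_placement N qs))) wit &&
  covers (N.-1 - L) (chords N L) (map (start_state N L) wit).

Lemma aligned_start_state N L qs :
  uniq (cycle_images L (witness_placement N qs)) ->
  aligned (cycle_images L) (chords N L) (start_state N L qs).
Proof. by move=> uniq_qs; rewrite /aligned eqxx cats0. Qed.

Lemma certifiedP N L wit :
  certified N L wit -> forall c, subseq c (chords N L) -> size c = N.-1 - L ->
  exists2 ps, placement_ok N ps & uniq (images ps (cycle_edges L ++ c)).
Proof.
case/andP=> /allP wit_ok cov c sub_c size_c.
have all_start : all (aligned (cycle_images L) (chords N L)) (map (start_state N L) wit).
  by rewrite all_map; apply/allP => qs /wit_ok /andP[_ /aligned_start_state].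
have [_ /mapP[qs /wit_ok /andP[ok_qs _] ->] uniq_c] := coversP cov all_start sub_c size_c.
exists (witness_placement N qs) => //.
by rewrite images_cat -[images _ c]cats0.
Qed.

(** * Numbering the vertices along a cycle *)

Section CycleNumbering.

Variables (T : finType) (e : rel T) (s : seq T) (x0 : T).
Hypotheses (e_sym : symmetric e) (e_irr : irreflexive e).
Hypotheses (s_uniq : uniq s) (s_cycle : cycle e s) (s_size : 3 <= size s).

Definition numbering : seq T := s ++ [seq x <- enum T | x \notin s].
Definition vertex (a : nat) : T := nth x0 numbering a.
Definition label (x : T) : nat := index x numbering.

Lemma mem_numbering x : x \in numbering.
Proof. by rewrite mem_cat mem_filter mem_enum andbT orbN. Qed.

Lemma numbering_uniq : uniq numbering.
Proof.
rewrite cat_uniq s_uniq filter_uniq ?enum_uniq // andbT.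
by apply/hasPn => x; rewrite mem_filter => /andP[].
Qed.

Lemma size_numbering : size numbering = #|T|.
Proof.
rewrite cardE; apply/perm_size/uniq_perm; rewrite ?enum_uniq ?numbering_uniq //.
by move=> x; rewrite mem_numbering mem_enum.
Qed.

Lemma label_lt x : label x < #|T|.
Proof. by rewrite -size_numbering index_mem mem_numbering. Qed.

Lemma labelK : cancel label vertex.
Proof. by move=> x; rewrite /vertex /label nth_index ?mem_numbering. Qed.

Lemma label_inj : injective label.
Proof. by move=> x y; apply: (index_inj x); apply: mem_numbering. Qed.

Lemma vertexK a : a < #|T| -> label (vertex a) = a.
Proof. by move=> a_lt; rewrite /label /vertex index_uniq ?size_numbering ?numbering_uniq. Qed.

Lemma cycle_edges_adjacent ab : ab \in cycle_edges (size s) ->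
  (ab.1 < ab.2 < #|T|) && e (vertex ab.1) (vertex ab.2).
Proof.
have s_le : size s <= size numbering by rewrite size_cat leq_addr.
have vertex_s j : j < size s -> vertex j = nth x0 s j.
  by move=> j_lt; rewrite /vertex nth_cat j_lt.
have := s_cycle; rewrite (cycle_path x0) => /(pathP x0) adj.
rewrite -size_numbering inE => /predU1P[->|/mapP[j]] /=.
  have adj0 : e (nth x0 s 0) (nth x0 s (size s).-1).
    by rewrite e_sym nth_last; apply: (adj 0); lia.
  by rewrite !vertex_s ?adj0 ?andbT; lia.
rewrite mem_iota add0n => j_lt ->.
have adjS : e (nth x0 s j) (nth x0 s j.+1) by apply: (adj j.+1); lia.
by rewrite /= !vertex_s ?adjS ?andbT; lia.
Qed.

Definition edge_codes : seq (nat * nat) :=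
  [seq ab <- label_pairs #|T| | (ab.1 < ab.2) && e (vertex ab.1) (vertex ab.2)].

Definition graph_chords : seq (nat * nat) :=
  [seq ab <- chords #|T| (size s) | e (vertex ab.1) (vertex ab.2)].

Lemma mem_edge_codes a b :
  ((a, b) \in edge_codes) = [&& a < b, b < #|T| & e (vertex a) (vertex b)].
Proof.
rewrite mem_filter mem_label_pairs /=.
apply/and3P/and3P => [[/andP[ab eab] _ bN] | [ab bN eab]]; first by split.
by rewrite ab eab bN (ltn_trans ab bN).
Qed.

Lemma upair_label_edge x y : e x y -> upair (label x) (label y) \in edge_codes.
Proof.
move=> xy; rewrite /upair; case: ltngtP => [lt_xy|lt_yx|/label_inj eq_xy].
- by rewrite mem_edge_codes lt_xy label_lt !labelK.
- by rewrite mem_edge_codes lt_yx label_lt !labelK e_sym.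
- by move: xy; rewrite eq_xy e_irr.
Qed.

Lemma card_edge_set : #|edge_set e| = size edge_codes.
Proof.
pose edge_of (ab : nat * nat) := [set vertex ab.1; vertex ab.2].
have edge_of_inj : {in edge_codes &, injective edge_of}.
  move=> [a b] [c d]; rewrite !mem_edge_codes => /and3P[ab bN _] /and3P[cd dN _].
  have aN := ltn_trans ab bN; have cN := ltn_trans cd dN.
  by move=> /(upair_set2 label); rewrite /upair !vertexK // (ltnW ab) (ltnW cd).
have edges_eq : edge_set e =i map edge_of edge_codes.
  move=> S; apply/imset2P/mapP => [[x y _]|[[a b]]].
    rewrite inE => xy ->; exists (upair (label x) (label y)); first exact: upair_label_edge.
    by rewrite /edge_of /upair; case: leqP; rewrite /= !labelK // setUC.
  rewrite mem_edge_codes => /and3P[_ _ ab] ->.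
  by apply: (Imset2spec (x1 := vertex a) (x2 := vertex b)); rewrite ?inE.
rewrite (eq_card edges_eq) (card_uniqP _) ?size_map //.
by rewrite map_inj_in_uniq // filter_uniq ?label_pairs_uniq.
Qed.

Lemma graph_chordsE : graph_chords = [seq ab <- edge_codes | ab \notin cycle_edges (size s)].
Proof.
rewrite /graph_chords /chords /edge_codes -!filter_predI; apply: eq_filter => ab /=.
by case: (e _ _); case: (_ < _); rewrite /= ?andbT ?andbF.
Qed.

Lemma size_edge_codes : size edge_codes = size s + size graph_chords.
Proof.
rewrite graph_chordsE -[LHS](count_predC (mem (cycle_edges (size s)))) size_filter.
congr (_ + _); rewrite -size_filter -[in RHS](size_cycle_edges (ltnW (ltnW s_size))).
apply/perm_size/uniq_perm; rewrite ?filter_uniq ?label_pairs_uniq ?cycle_edges_uniq //.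
move=> [a b]; rewrite mem_filter andb_idr // => /cycle_edges_adjacent /= /andP[/andP[ab bN] adj].
by rewrite mem_edge_codes ab bN.
Qed.

Lemma label_edge_codes x y :
  e x y -> upair (label x) (label y) \in cycle_edges (size s) ++ graph_chords.
Proof.
move/upair_label_edge; rewrite mem_cat graph_chordsE mem_filter.
by case: (_ \in cycle_edges _).
Qed.

End CycleNumbering.

Lemma placeable_of_labels (T : finType) (e : rel T) (lab : T -> nat) ps E :
  injective lab -> (forall x, lab x < #|T|) -> placement_ok #|T| ps ->
  uniq (images ps E) -> (forall x y, e x y -> upair (lab x) (lab y) \in E) ->
  placeable e 4.
Proof.
move=> lab_inj lab_lt /andP[/eqP size_ps /allP perm_ps] uniq_ps lab_E.
have perm_i (i : 'I_4) : perm_eq (nth [::] ps i) (iota 0 #|T|).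
  by apply: perm_ps; rewrite mem_nth ?size_ps.
have size_i (i : 'I_4) : size (nth [::] ps i) = #|T|.
  by rewrite (perm_size (perm_i i)) size_iota.
have lt_i (i : 'I_4) x : nth 0 (nth [::] ps i) (lab x) < #|T|.
  have : nth 0 (nth [::] ps i) (lab x) \in iota 0 #|T|.
    by rewrite -(perm_mem (perm_i i)) mem_nth ?size_i.
  by rewrite mem_iota.
exists (fun i x => Ordinal (lt_i i x)); split.
  move=> i; apply: inj_card_bij; last by rewrite card_ord.
  move=> x y [] /eqP; rewrite nth_uniq ?size_i ?(perm_uniq (perm_i i)) ?iota_uniq //.
  by move/eqP/lab_inj.
move=> i j ij; rewrite -setI_eq0; apply/eqP/setP => S; rewrite !inE.
apply/andP => -[/imset2P[x y _ + ->] /imset2P[x' y' _ + /(upair_set2 val) /= eq_img]].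
rewrite !inE => xy x'y'.
have := images_uniq_relabel_neq uniq_ps (lab_E _ _ xy) (lab_E _ _ x'y') (i := i) (j := j).
by rewrite !relabel_upair eq_img size_ps !ltn_ord eqxx => /(_ isT isT ij).
Qed.

(** * Certificates *)

Definition witnesses_10_9 : seq (seq (seq nat)) := [::
  [:: [::8;9;0;5;2;4;6;3;1;7]; [::9;4;0;2;6;8;5;1;7;3]; [::7;0;3;5;9;1;4;8;2;6]]].

Definition witnesses_11_9 : seq (seq (seq nat)) := [::
  [:: [::5;8;2;4;0;3;7;10;1;6;9]; [::0;10;4;8;3;6;9;5;7;1;2]; [::2;0;9;8;1;6;10;3;5;7;4]];
  [:: [::1;5;10;7;2;6;0;4;8;9;3]; [::10;0;5;7;1;6;9;2;4;8;3]; [::10;2;0;7;4;1;3;8;9;6;5]];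
  [:: [::5;3;1;7;9;2;6;10;8;0;4]; [::3;7;0;10;5;1;9;4;6;8;2]; [::7;10;4;8;3;0;9;5;2;6;1]];
  [:: [::10;3;9;8;4;7;1;6;0;5;2]; [::9;4;6;10;2;5;3;7;0;1;8]; [::5;10;7;9;1;4;2;6;8;0;3]];
  [:: [::7;2;9;1;3;8;10;5;0;6;4]; [::2;8;1;7;10;9;4;0;6;3;5]; [::5;7;9;0;3;6;4;10;1;2;8]];
  [:: [::8;6;1;5;10;0;2;7;4;3;9]; [::10;4;0;9;2;8;5;3;1;6;7]; [::8;3;10;6;0;5;2;4;1;7;9]];
  [:: [::5;2;9;4;0;10;8;3;7;1;6]; [::8;1;3;9;0;5;10;4;6;2;7]; [::9;5;8;2;10;7;4;1;6;0;3]];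
  [:: [::4;1;5;9;3;8;10;6;2;0;7]; [::9;10;3;5;2;0;7;4;6;1;8]; [::7;2;9;4;0;10;1;8;5;6;3]];
  [:: [::6;10;2;5;8;1;9;4;0;7;3]; [::2;4;7;3;10;1;6;8;9;0;5]; [::4;10;5;0;3;9;7;2;6;1;8]];
  [:: [::6;0;5;8;4;9;1;10;3;7;2]; [::7;4;2;6;8;10;9;0;3;1;5]; [::8;9;3;5;7;1;4;0;2;10;6]];
  [:: [::0;6;9;3;7;4;2;5;10;8;1]; [::0;9;4;10;2;7;1;3;5;8;6]; [::1;6;2;0;3;10;8;5;9;4;7]];
  [:: [::1;10;2;4;9;3;0;5;7;6;8]; [::3;6;9;7;0;4;1;8;10;2;5]; [::1;6;4;8;2;9;0;10;5;7;3]];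
  [:: [::8;10;4;1;7;9;2;0;5;6;3]; [::8;2;6;0;10;1;5;9;3;4;7]; [::7;0;4;8;9;1;3;10;2;6;5]];
  [:: [::0;5;7;9;10;2;6;1;4;8;3]; [::10;0;2;5;8;4;9;3;1;7;6]; [::7;0;9;1;8;6;3;10;4;2;5]]].

Definition witnesses_11_10 : seq (seq (seq nat)) := [::
  [:: [::6;10;5;2;8;4;7;1;3;9;0]; [::7;0;8;10;4;2;6;1;5;9;3]; [::9;10;1;8;5;3;6;4;0;2;7]]].

Definition witnesses_12_9 : seq (seq (seq nat)) := [::
  [:: [::8;6;4;7;1;10;11;5;3;0;2;9]; [::0;2;9;10;7;3;11;1;5;6;4;8]; [::8;9;6;3;10;0;11;7;2;5;1;4]];
  [:: [::1;4;9;8;11;3;5;2;6;0;7;10]; [::9;10;8;6;11;0;7;3;1;5;2;4]; [::11;1;10;4;6;3;9;0;2;7;5;8]];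
  [:: [::10;11;6;0;9;2;8;5;3;7;4;1]; [::2;7;4;1;11;8;9;10;0;5;3;6]; [::5;11;3;1;8;6;10;4;0;9;2;7]];
  [:: [::11;2;0;5;3;7;10;9;4;6;1;8]; [::5;9;6;2;10;0;4;7;11;1;3;8]; [::1;5;2;7;0;9;3;6;10;4;11;8]];
  [:: [::0;11;2;10;3;1;8;9;6;4;7;5]; [::3;8;2;7;1;9;10;5;11;0;6;4]; [::4;8;6;10;11;7;5;9;0;3;2;1]];
  [:: [::8;5;0;2;7;1;3;6;10;11;4;9]; [::7;3;8;11;6;2;5;9;10;1;4;0]; [::5;3;0;6;4;8;2;10;11;7;9;1]];
  [:: [::9;2;8;3;11;0;5;7;1;10;4;6]; [::7;4;1;8;6;3;0;2;10;11;9;5]; [::2;7;0;10;8;5;3;1;11;4;9;6]];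
  [:: [::2;11;7;5;8;1;6;10;9;0;4;3]; [::2;4;10;11;0;3;7;9;6;8;5;1]; [::1;10;7;0;6;4;8;11;9;3;2;5]];
  [:: [::11;3;8;6;2;7;1;10;4;9;5;0]; [::1;4;6;10;5;2;9;0;11;8;3;7]; [::11;2;10;7;3;0;5;8;9;4;6;1]];
  [:: [::1;6;8;10;7;9;2;0;11;5;3;4]; [::10;3;8;9;11;2;7;5;1;4;0;6]; [::10;0;9;5;2;4;1;3;6;11;7;8]];
  [:: [::7;3;8;11;2;0;5;10;1;6;4;9]; [::3;5;1;6;10;0;4;8;9;11;2;7]; [::2;10;9;0;7;5;8;6;4;11;3;1]];
  [:: [::0;5;3;6;8;1;9;10;2;4;11;7]; [::1;6;10;0;9;7;5;11;3;2;4;8]; [::6;4;2;5;10;3;0;7;11;8;1;9]];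
  [:: [::3;1;6;2;10;4;8;5;9;0;7;11]; [::7;2;11;8;10;5;0;9;4;3;6;1]; [::6;11;1;8;9;7;3;0;4;5;2;10]];
  [:: [::9;1;10;2;7;5;11;6;0;4;3;8]; [::0;7;11;8;10;4;2;9;3;6;5;1]; [::5;3;1;4;8;6;9;11;0;2;10;7]];
  [:: [::6;1;10;7;2;5;3;11;0;8;9;4]; [::5;7;4;2;8;6;3;9;10;0;11;1]; [::9;5;0;7;1;3;10;6;11;2;8;4]];
  [:: [::11;6;10;0;9;3;8;2;4;7;5;1]; [::7;4;9;6;2;11;1;5;10;3;0;8]; [::9;1;6;3;7;0;11;10;8;2;5;4]];
  [:: [::5;9;3;10;8;11;2;6;0;7;1;4]; [::9;11;3;8;1;4;10;5;2;7;0;6]; [::1;3;6;4;11;7;9;0;10;8;2;5]];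
  [:: [::9;3;7;1;5;10;6;4;0;11;2;8]; [::8;3;1;11;2;7;10;9;5;4;0;6]; [::9;6;0;10;4;8;2;5;11;7;3;1]];
  [:: [::5;3;9;2;7;11;10;6;0;4;1;8]; [::11;8;10;1;6;4;7;9;5;3;0;2]; [::9;10;3;0;7;5;2;4;11;6;8;1]];
  [:: [::4;2;0;6;8;1;10;3;9;7;11;5]; [::7;5;9;2;10;4;1;6;11;8;3;0]; [::4;8;10;5;3;7;1;11;0;9;2;6]];
  [:: [::7;9;8;6;10;3;5;11;2;1;0;4]; [::8;3;6;11;0;9;2;5;1;4;10;7]; [::11;3;9;6;1;7;10;4;8;5;2;0]];
  [:: [::8;5;3;11;2;10;7;1;4;6;9;0]; [::10;4;0;11;5;1;9;8;3;2;6;7]; [::4;6;8;2;5;9;3;7;11;10;1;0]];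
  [:: [::10;0;4;1;7;11;6;9;2;8;5;3]; [::2;4;7;10;1;6;0;3;8;5;9;11]; [::6;10;9;4;11;5;0;7;3;2;1;8]];
  [:: [::11;6;3;8;10;9;4;2;7;1;0;5]; [::11;5;8;9;0;7;1;6;4;2;3;10]; [::11;9;1;8;6;2;5;10;0;4;7;3]];
  [:: [::7;10;9;8;2;0;6;3;1;11;5;4]; [::4;8;5;7;9;1;10;2;11;0;6;3]; [::11;7;4;6;10;3;0;9;5;1;8;2]];
  [:: [::2;11;4;1;10;5;8;3;9;7;6;0]; [::3;6;11;0;4;7;5;9;1;8;2;10]; [::10;9;0;3;11;7;2;4;6;8;5;1]];
  [:: [::2;4;11;1;5;9;7;3;0;10;6;8]; [::3;9;2;8;11;10;5;7;1;6;4;0]; [::2;11;3;10;4;8;5;0;7;6;9;1]];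
  [:: [::2;7;10;0;11;1;6;9;8;3;4;5]; [::10;5;11;2;4;6;8;3;9;1;0;7]; [::1;7;5;3;6;0;9;4;8;2;11;10]];
  [:: [::2;11;6;1;10;0;3;5;9;8;7;4]; [::8;3;1;4;0;6;9;10;5;11;7;2]; [::7;2;0;9;3;6;8;4;11;10;1;5]];
  [:: [::4;7;5;1;11;9;2;8;6;3;10;0]; [::11;7;9;6;10;2;5;0;3;8;1;4]; [::5;11;8;10;0;4;1;3;9;6;2;7]];
  [:: [::1;8;11;10;7;5;9;4;6;3;0;2]; [::8;4;10;6;9;0;2;5;3;7;11;1]; [::4;7;9;8;2;11;1;3;0;10;5;6]];
  [:: [::8;2;0;9;4;10;5;7;1;3;6;11]; [::11;1;6;4;0;10;9;2;7;8;5;3]; [::6;0;3;1;4;11;9;7;10;2;5;8]];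
  [:: [::10;0;11;2;6;9;3;1;8;5;7;4]; [::10;2;5;7;9;11;6;0;3;4;8;1]; [::1;10;7;0;4;9;8;11;5;6;3;2]];
  [:: [::5;10;1;11;8;3;9;7;2;4;0;6]; [::6;10;0;3;1;7;4;11;2;8;5;9]; [::9;0;5;11;3;6;4;1;8;2;10;7]];
  [:: [::9;6;10;3;7;1;8;4;11;0;5;2]; [::9;5;8;6;4;1;10;0;3;2;11;7]; [::6;1;3;5;7;10;9;2;11;4;8;0]];
  [:: [::5;8;1;7;10;9;6;3;0;2;11;4]; [::8;2;4;11;5;9;0;7;3;10;1;6]; [::4;9;2;11;8;6;1;5;10;3;0;7]];
  [:: [::9;0;11;4;10;1;5;2;8;6;7;3]; [::8;11;6;4;1;7;10;5;3;0;9;2]; [::6;0;10;2;9;3;7;11;1;5;4;8]];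
  [:: [::0;5;9;7;2;8;3;10;11;4;6;1]; [::3;1;10;2;9;11;4;8;6;0;5;7]; [::10;6;11;3;7;5;2;4;9;0;8;1]];
  [:: [::1;5;8;6;11;0;4;9;3;10;7;2]; [::6;9;0;7;3;5;11;8;10;4;1;2]; [::7;11;10;5;0;3;6;1;4;8;9;2]];
  [:: [::1;9;4;7;10;2;0;5;11;6;8;3]; [::1;7;0;4;6;2;9;8;3;10;5;11]; [::3;9;5;8;6;11;2;4;10;7;0;1]];
  [:: [::3;10;2;5;9;7;4;1;11;6;0;8]; [::7;2;0;3;6;11;9;10;5;8;1;4]; [::0;5;3;7;1;10;8;4;11;6;9;2]];
  [:: [::3;10;8;1;6;4;7;9;11;2;0;5]; [::0;11;10;2;5;8;9;3;7;1;6;4]; [::11;7;2;8;4;10;6;9;5;0;1;3]];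
  [:: [::3;1;9;10;8;6;2;4;7;11;0;5]; [::3;6;0;7;1;11;9;2;10;4;8;5]; [::4;9;7;10;0;5;11;3;8;1;6;2]];
  [:: [::9;6;0;5;10;2;8;11;3;7;1;4]; [::6;11;1;10;3;5;7;0;2;9;4;8]; [::1;6;10;0;9;7;11;2;4;8;3;5]];
  [:: [::4;8;1;5;7;2;0;3;10;11;6;9]; [::3;7;9;4;1;10;6;8;5;11;0;2]; [::10;7;11;5;2;6;9;3;8;0;4;1]];
  [:: [::8;3;6;0;2;11;10;1;9;5;4;7]; [::6;11;9;0;7;4;1;5;2;8;3;10]; [::7;5;0;10;6;4;9;3;11;2;8;1]];
  [:: [::3;8;2;10;1;6;4;0;5;7;11;9]; [::6;10;7;11;1;5;2;4;8;9;3;0]; [::0;11;8;9;10;5;7;2;6;3;4;1]];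
  [:: [::11;9;10;1;4;8;2;0;3;6;5;7]; [::6;11;5;8;10;2;4;7;1;0;9;3]; [::5;9;2;6;3;7;10;11;0;1;4;8]];
  [:: [::6;0;9;1;5;3;10;4;8;11;7;2]; [::10;6;11;0;4;1;7;2;8;3;9;5]; [::2;6;9;4;11;5;7;3;0;10;8;1]];
  [:: [::0;5;2;8;9;1;4;10;3;7;11;6]; [::4;8;10;6;3;9;11;7;0;5;1;2]; [::2;6;0;9;5;1;8;11;4;10;7;3]];
  [:: [::0;5;1;7;9;10;8;3;6;2;4;11]; [::3;10;4;1;11;2;8;5;9;0;7;6]; [::9;6;10;2;7;3;11;0;4;8;1;5]];
  [:: [::7;4;8;2;6;11;0;9;10;1;5;3]; [::11;9;5;8;3;1;7;0;4;2;10;6]; [::2;7;3;0;6;9;4;1;10;5;11;8]];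
  [:: [::11;6;8;1;5;2;10;3;7;9;0;4]; [::0;11;10;7;1;4;8;5;3;6;9;2]; [::9;0;7;5;11;1;10;4;6;8;3;2]];
  [:: [::10;6;4;1;9;0;2;5;3;11;7;8]; [::9;8;4;0;6;3;1;7;2;10;11;5]; [::11;3;0;5;1;6;2;4;9;8;10;7]];
  [:: [::11;7;1;6;0;2;4;10;9;8;3;5]; [::9;6;8;4;11;10;2;5;0;3;1;7]; [::7;10;5;9;3;1;8;11;0;6;4;2]];
  [:: [::0;6;3;9;11;4;7;10;5;1;8;2]; [::0;3;1;9;2;8;6;11;7;10;4;5]; [::1;7;3;11;0;2;4;6;10;8;5;9]];
  [:: [::7;4;0;10;2;5;9;6;1;8;11;3]; [::0;5;7;3;10;4;9;1;11;6;8;2]; [::4;6;8;2;0;3;11;10;1;9;5;7]];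
  [:: [::11;1;6;8;2;5;7;10;4;3;0;9]; [::10;6;9;0;3;5;8;4;2;11;7;1]; [::1;7;9;2;11;10;3;6;4;0;8;5]];
  [:: [::1;7;2;11;10;3;0;5;9;6;4;8]; [::10;5;1;3;6;0;11;8;2;9;7;4]; [::7;0;9;8;1;6;10;4;11;5;3;2]];
  [:: [::9;6;10;8;11;3;5;0;7;4;2;1]; [::2;7;3;6;1;5;9;10;0;11;4;8]; [::1;9;11;10;2;4;0;6;8;3;5;7]];
  [:: [::10;0;5;8;2;9;3;1;6;11;4;7]; [::5;10;9;6;0;7;4;11;3;8;2;1]; [::10;11;2;0;3;6;8;9;4;5;7;1]];
  [:: [::9;5;2;11;0;3;7;10;8;1;6;4]; [::0;2;4;9;6;11;7;1;10;5;3;8]; [::11;1;8;6;3;10;5;0;4;2;9;7]];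
  [:: [::6;4;10;7;2;11;9;3;0;5;8;1]; [::9;6;3;7;4;8;10;5;1;2;0;11]; [::4;0;11;8;6;2;9;10;1;5;7;3]];
  [:: [::4;1;6;11;0;7;10;3;8;5;2;9]; [::6;3;7;4;10;11;2;5;9;1;8;0]; [::5;7;11;4;9;3;1;8;10;2;0;6]];
  [:: [::2;0;7;10;3;6;1;9;8;5;4;11]; [::2;4;7;11;8;10;9;0;5;3;1;6]; [::4;10;6;11;5;3;7;2;9;1;0;8]];
  [:: [::10;1;8;6;4;0;9;11;7;2;5;3]; [::7;0;5;3;10;4;1;6;9;2;11;8]; [::11;0;10;2;8;5;1;9;3;7;4;6]];
  [:: [::10;0;6;8;1;9;7;5;11;4;3;2]; [::6;3;8;11;0;4;2;5;1;10;7;9]; [::10;3;11;1;4;8;9;0;7;2;5;6]];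
  [:: [::4;11;10;7;5;8;9;0;2;3;6;1]; [::9;5;3;8;2;6;0;4;7;1;11;10]; [::10;9;3;7;2;5;1;8;4;0;6;11]];
  [:: [::4;0;3;11;1;8;5;7;10;6;2;9]; [::3;6;9;0;5;1;7;4;8;10;2;11]; [::0;10;8;11;6;1;9;3;7;4;2;5]];
  [:: [::10;8;11;9;0;7;1;5;3;2;4;6]; [::11;2;4;9;1;8;5;7;10;6;3;0]; [::11;0;6;3;7;9;10;1;4;8;5;2]];
  [:: [::6;2;9;7;11;10;1;5;0;8;4;3]; [::6;3;1;7;2;11;0;9;10;8;5;4]; [::7;10;2;5;8;9;1;4;0;6;11;3]];
  [:: [::1;6;10;5;2;8;4;11;3;0;9;7]; [::7;0;2;4;6;9;3;5;11;8;1;10]; [::0;3;6;8;10;4;7;1;9;5;11;2]];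
  [:: [::5;10;7;2;4;8;1;3;11;6;9;0]; [::11;1;6;4;0;9;10;3;8;5;7;2]; [::2;0;6;9;3;7;4;1;10;11;5;8]];
  [:: [::9;8;2;6;0;7;3;1;11;10;5;4]; [::4;0;5;7;9;1;6;10;2;11;8;3]; [::3;9;2;11;7;1;4;10;5;8;0;6]];
  [:: [::11;8;6;3;10;2;9;5;7;1;4;0]; [::4;11;0;7;9;3;8;5;10;1;6;2]; [::2;4;7;1;6;10;0;5;11;9;8;3]];
  [:: [::5;7;1;8;6;0;11;2;10;3;9;4]; [::11;10;8;5;0;4;2;7;9;1;6;3]; [::4;6;2;8;3;5;1;10;9;0;7;11]];
  [:: [::1;8;11;10;0;7;2;9;6;3;4;5]; [::8;2;6;11;7;9;3;1;4;10;5;0]; [::10;8;3;0;11;4;2;5;1;7;9;6]];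
  [:: [::11;2;5;8;3;10;4;1;7;9;0;6]; [::9;1;6;11;3;7;10;0;4;5;8;2]; [::9;5;3;0;11;8;6;10;2;1;7;4]];
  [:: [::0;10;7;2;6;1;4;9;11;3;5;8]; [::11;10;4;7;1;5;0;3;8;2;6;9]; [::0;6;9;7;3;5;8;2;4;11;1;10]];
  [:: [::8;10;6;1;11;2;4;7;5;3;9;0]; [::10;9;8;2;6;0;7;3;1;11;4;5]; [::11;4;9;5;0;10;3;8;6;1;2;7]];
  [:: [::5;11;3;0;4;9;6;10;2;1;8;7]; [::4;2;0;5;8;3;9;11;7;6;1;10]; [::8;1;7;5;3;6;4;10;11;9;0;2]];
  [:: [::1;9;0;7;11;8;6;2;10;5;4;3]; [::9;6;1;11;5;7;2;0;4;3;8;10]; [::9;8;3;5;0;11;2;4;10;6;7;1]];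
  [:: [::10;4;6;1;11;7;5;8;9;2;3;0]; [::11;4;8;6;2;9;7;10;0;1;5;3]; [::3;1;10;11;5;2;7;0;9;6;4;8]];
  [:: [::1;10;11;6;2;4;7;5;9;0;8;3]; [::9;8;1;3;5;10;4;11;0;2;7;6]; [::9;6;1;11;3;0;7;2;10;4;8;5]];
  [:: [::5;10;1;4;7;9;6;0;11;2;8;3]; [::11;2;7;10;9;0;4;6;3;5;1;8]; [::6;10;3;1;5;9;4;2;8;11;0;7]];
  [:: [::5;2;11;3;10;4;0;7;9;6;8;1]; [::1;9;6;11;0;10;8;5;3;2;4;7]; [::2;9;3;8;4;11;10;1;7;6;0;5]];
  [:: [::9;5;1;3;8;6;4;10;0;7;11;2]; [::11;3;10;2;8;4;9;6;1;5;0;7]; [::1;10;6;2;5;0;3;9;8;11;7;4]];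
  [:: [::10;7;4;9;1;6;2;8;11;5;3;0]; [::9;11;5;0;3;6;4;2;10;7;1;8]; [::11;6;0;10;3;8;5;1;7;2;9;4]];
  [:: [::7;9;11;10;4;2;8;1;3;5;6;0]; [::4;9;1;7;2;10;3;0;11;8;5;6]; [::5;1;11;2;6;4;0;9;10;7;8;3]];
  [:: [::9;1;10;0;7;2;11;6;4;5;3;8]; [::2;5;11;9;8;10;3;0;6;7;1;4]; [::0;9;2;10;5;7;4;8;11;6;1;3]];
  [:: [::11;0;3;9;10;4;6;8;5;7;1;2]; [::10;1;9;4;8;2;7;11;3;0;6;5]; [::6;11;1;5;2;0;9;7;10;3;8;4]];
  [:: [::9;7;5;3;6;2;8;11;10;1;4;0]; [::7;10;5;1;6;11;9;4;0;8;3;2]; [::2;5;8;9;1;4;7;3;10;0;11;6]];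
  [:: [::6;4;8;11;10;1;3;5;9;2;0;7]; [::10;9;7;2;0;6;8;1;4;3;11;5]; [::3;0;7;1;6;11;5;8;9;10;4;2]];
  [:: [::0;9;4;1;3;11;8;6;2;10;7;5]; [::1;11;2;4;7;3;10;9;6;0;5;8]; [::2;8;3;0;4;11;7;9;5;6;1;10]];
  [:: [::4;8;5;10;2;0;9;3;11;6;1;7]; [::6;3;5;9;7;1;11;8;2;0;10;4]; [::11;5;0;4;7;10;9;1;6;3;2;8]];
  [:: [::3;8;5;0;4;11;10;2;6;7;1;9]; [::10;1;3;5;2;7;11;6;4;8;0;9]; [::1;11;5;7;0;6;10;8;9;4;3;2]];
  [:: [::1;6;8;2;5;0;11;7;9;10;4;3]; [::0;3;7;5;9;2;10;4;6;8;1;11]; [::3;5;10;7;2;4;11;9;8;6;1;0]]].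

Definition witnesses_12_10 : seq (seq (seq nat)) := [::
  [:: [::11;10;5;3;1;4;7;0;8;2;6;9]; [::0;6;10;2;9;11;7;1;8;4;5;3]; [::0;5;11;3;10;7;9;4;6;2;1;8]];
  [:: [::10;0;2;11;3;7;4;8;5;1;6;9]; [::10;4;11;1;9;7;0;5;2;6;3;8]; [::3;6;1;8;11;10;2;7;5;9;0;4]];
  [:: [::6;9;3;5;2;8;10;4;7;11;1;0]; [::1;11;2;6;3;0;10;7;9;4;5;8]; [::5;8;3;10;11;4;0;2;7;1;6;9]];
  [:: [::10;2;6;9;11;8;1;4;7;3;5;0]; [::11;2;8;5;7;0;3;9;1;6;4;10]; [::4;11;1;3;6;8;0;10;5;9;2;7]];
  [:: [::2;0;11;4;1;7;9;10;3;5;6;8]; [::3;7;5;11;6;2;8;10;4;0;1;9]; [::0;7;10;2;9;11;3;6;1;8;4;5]];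
  [:: [::6;9;11;2;7;0;3;1;10;4;5;8]; [::2;0;6;3;9;1;7;11;8;4;10;5]; [::1;11;0;4;7;5;9;2;10;6;8;3]];
  [:: [::11;1;5;9;2;8;4;10;3;6;0;7]; [::3;5;7;9;6;4;2;11;10;8;0;1]; [::11;5;10;7;2;0;8;1;9;4;3;6]];
  [:: [::10;11;0;5;1;8;2;7;4;9;6;3]; [::8;4;11;2;9;1;7;3;6;10;5;0]; [::11;9;7;0;8;3;5;2;4;6;10;1]];
  [:: [::6;8;3;1;7;9;2;10;11;4;0;5]; [::11;1;10;0;6;9;4;7;2;5;3;8]; [::7;5;10;9;3;6;1;8;11;0;2;4]];
  [:: [::6;4;9;2;10;1;11;8;5;0;7;3]; [::10;0;3;5;7;1;9;6;2;11;8;4]; [::2;7;10;5;1;6;3;8;4;0;9;11]]].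

Definition witnesses_12_11 : seq (seq (seq nat)) := [::
  [:: [::6;8;0;7;4;11;10;3;9;5;1;2]; [::3;7;10;6;0;9;2;5;8;1;11;4]; [::7;9;1;10;8;4;2;11;0;3;5;6]]].

Definition witnesses_13_9 : seq (seq (seq nat)) := [::
  [:: [::8;9;1;4;10;0;12;11;6;7;5;2;3]; [::10;7;12;9;6;3;0;4;8;1;5;11;2]; [::9;3;8;12;1;6;10;5;0;4;11;2;7]];
  [:: [::12;7;9;11;8;3;10;5;0;4;1;2;6]; [::7;0;11;5;2;8;1;9;3;4;10;6;12]; [::10;8;4;2;11;3;6;12;1;0;5;9;7]];
  [:: [::4;8;1;9;5;7;0;6;2;10;12;11;3]; [::8;12;6;10;1;4;0;2;5;7;11;9;3]; [::2;7;4;11;0;5;1;6;8;3;9;10;12]];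
  [:: [::8;11;5;3;12;2;0;4;10;6;1;9;7]; [::1;10;3;7;9;8;2;5;12;6;11;0;4]; [::4;6;12;0;11;7;5;9;2;1;8;3;10]];
  [:: [::10;2;9;0;3;12;5;7;1;6;4;11;8]; [::1;12;0;10;6;11;7;2;5;4;8;9;3]; [::11;0;7;9;12;2;4;1;3;6;8;5;10]];
  [:: [::4;8;10;12;9;5;1;11;2;3;7;0;6]; [::10;1;8;6;3;0;7;12;11;2;9;5;4]; [::0;10;4;6;9;11;3;8;5;1;7;2;12]];
  [:: [::4;11;12;9;10;0;2;8;1;5;3;6;7]; [::9;4;6;1;7;11;10;5;0;2;12;8;3]; [::4;0;3;5;9;8;12;10;2;1;7;6;11]];
  [:: [::0;7;11;6;3;1;10;2;9;4;8;5;12]; [::9;10;0;4;2;8;5;11;3;1;7;6;12]; [::6;0;5;9;7;2;11;8;4;10;1;3;12]];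
  [:: [::1;10;8;6;2;9;4;0;3;5;12;7;11]; [::12;10;7;11;2;5;9;8;4;3;0;6;1]; [::11;6;10;2;7;0;9;3;12;4;8;1;5]];
  [:: [::0;3;5;10;2;6;4;8;11;9;12;7;1]; [::0;4;2;11;10;9;8;3;6;1;12;5;7]; [::0;10;6;1;11;5;12;9;2;8;7;4;3]];
  [:: [::4;10;12;1;3;11;9;6;0;5;7;2;8]; [::2;5;11;4;7;3;6;1;9;0;8;12;10]; [::4;8;2;6;11;12;0;10;9;5;3;1;7]];
  [:: [::3;12;8;11;1;4;7;2;0;5;10;6;9]; [::4;2;5;8;3;11;6;1;12;10;9;7;0]; [::2;9;10;1;3;7;0;4;8;6;11;5;12]];
  [:: [::9;6;12;3;0;11;4;8;10;5;2;1;7]; [::3;8;6;1;9;7;12;0;10;11;5;4;2]; [::2;12;4;9;8;5;1;10;6;0;11;7;3]];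
  [:: [::11;9;6;2;0;4;8;3;1;5;10;12;7]; [::11;2;8;5;12;9;4;6;0;3;10;7;1]; [::9;2;4;1;6;3;7;5;0;10;11;12;8]];
  [:: [::1;9;5;0;3;10;11;12;6;7;8;2;4]; [::6;2;11;4;12;5;7;1;10;3;0;8;9]; [::8;12;3;7;0;4;2;5;10;11;6;1;9]];
  [:: [::0;7;10;6;4;2;12;3;9;1;5;8;11]; [::5;12;4;1;7;11;3;8;10;9;6;2;0]; [::5;9;7;3;1;12;10;4;0;2;8;6;11]];
  [:: [::12;10;2;8;6;9;3;1;7;4;11;5;0]; [::2;7;9;5;8;4;11;12;6;3;10;0;1]; [::7;4;0;11;9;10;1;5;3;2;8;12;6]];
  [:: [::1;5;0;4;2;9;8;10;12;6;11;7;3]; [::6;12;9;10;4;7;11;3;8;0;1;2;5]; [::0;6;11;2;8;1;3;5;12;7;10;9;4]];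
  [:: [::6;11;7;1;4;9;8;10;0;2;5;12;3]; [::9;12;2;8;11;10;6;3;0;7;5;1;4]; [::8;12;3;1;9;5;0;2;6;4;11;10;7]];
  [:: [::6;3;12;2;5;11;0;10;4;9;1;7;8]; [::0;6;12;1;11;4;8;10;3;7;9;5;2]; [::5;3;11;8;2;7;10;6;1;9;4;12;0]];
  [:: [::10;9;8;4;7;3;5;1;12;6;2;0;11]; [::7;11;4;12;2;5;10;1;9;0;6;3;8]; [::4;10;7;1;6;2;8;12;9;0;3;11;5]];
  [:: [::10;8;2;11;6;3;7;9;5;0;12;1;4]; [::6;10;0;2;4;12;3;9;1;8;5;7;11]; [::1;5;8;12;0;6;4;11;7;10;9;2;3]];
  [:: [::6;1;5;10;12;11;8;9;0;2;4;7;3]; [::2;4;11;6;8;12;0;3;10;5;7;9;1]; [::7;3;8;10;4;0;2;12;5;1;11;9;6]];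
  [:: [::5;9;8;4;12;10;0;7;3;11;6;1;2]; [::0;12;11;6;1;8;10;7;5;4;3;2;9]; [::4;10;2;12;6;0;9;11;7;8;3;1;5]];
  [:: [::7;1;10;2;6;8;11;12;5;3;9;4;0]; [::2;11;4;6;10;7;3;8;5;1;12;0;9]; [::5;0;4;12;3;6;11;10;9;7;1;2;8]];
  [:: [::9;5;2;0;6;11;3;12;8;10;7;1;4]; [::1;4;10;3;8;2;9;0;11;7;12;5;6]; [::1;3;6;4;12;11;9;7;5;0;10;2;8]];
  [:: [::9;12;6;4;8;5;0;7;11;2;3;1;10]; [::1;10;4;9;0;6;11;5;3;2;12;7;8]; [::1;12;7;2;4;0;10;9;8;3;5;6;11]];
  [:: [::1;6;2;12;11;5;0;10;9;8;7;4;3]; [::3;5;8;9;6;11;2;10;12;4;0;1;7]; [::3;0;4;2;7;12;5;1;11;10;9;8;6]];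
  [:: [::12;10;9;0;3;8;6;2;4;5;11;7;1]; [::2;11;8;10;7;3;6;9;5;1;0;4;12]; [::3;1;9;2;10;0;7;4;11;12;5;8;6]];
  [:: [::11;1;3;12;2;8;4;10;5;9;7;6;0]; [::4;1;9;7;11;6;10;2;0;12;5;8;3]; [::6;2;5;12;0;9;10;8;1;3;11;7;4]];
  [:: [::11;5;10;7;3;6;2;4;8;12;1;0;9]; [::9;8;12;10;11;0;6;4;1;5;3;2;7]; [::2;0;4;10;3;11;6;9;12;1;7;8;5]];
  [:: [::3;5;11;2;7;1;10;4;9;12;8;6;0]; [::8;6;11;4;0;5;7;12;3;9;1;2;10]; [::9;2;12;10;6;1;4;7;0;11;3;5;8]];
  [:: [::4;8;2;10;5;11;6;0;7;1;9;3;12]; [::2;11;12;5;0;10;3;8;6;9;1;4;7]; [::6;12;1;5;9;10;11;7;3;4;0;2;8]];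
  [:: [::12;11;2;8;1;9;0;6;10;7;5;3;4]; [::10;1;7;12;6;8;11;9;2;3;0;4;5]; [::8;12;1;5;0;7;2;6;9;11;10;4;3]];
  [:: [::8;11;0;2;9;7;12;5;1;6;3;10;4]; [::5;8;2;10;7;4;1;6;0;9;12;3;11]; [::10;0;3;1;9;6;11;12;8;7;2;4;5]];
  [:: [::3;12;5;2;10;6;11;7;9;4;8;0;1]; [::5;11;1;9;10;4;2;12;7;6;8;3;0]; [::12;11;3;0;2;7;10;5;1;4;9;8;6]];
  [:: [::5;12;9;8;10;6;2;11;0;7;1;3;4]; [::6;8;2;9;3;12;1;10;4;11;5;0;7]; [::1;4;8;3;5;2;10;0;6;9;7;11;12]];
  [:: [::3;6;2;4;10;7;0;5;12;11;1;9;8]; [::0;2;8;11;3;5;7;12;9;10;6;1;4]; [::7;1;11;9;6;8;3;0;4;12;2;10;5]];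
  [:: [::9;8;12;10;2;5;1;6;0;11;4;7;3]; [::6;4;9;11;1;8;3;12;2;0;7;5;10]; [::6;8;11;7;2;9;1;10;3;5;0;4;12]];
  [:: [::10;8;4;12;9;3;1;11;0;7;5;2;6]; [::5;0;3;6;9;11;2;4;10;1;7;12;8]; [::2;9;0;6;8;1;5;12;7;3;10;4;11]];
  [:: [::9;7;1;8;12;5;10;4;0;3;2;6;11]; [::10;8;6;0;3;11;1;12;7;4;2;9;5]; [::6;3;8;9;11;5;7;4;2;0;1;12;10]];
  [:: [::3;6;11;10;8;9;0;4;7;1;5;12;2]; [::2;11;4;10;3;1;7;0;12;8;5;6;9]; [::3;5;10;7;12;6;4;2;0;1;8;9;11]];
  [:: [::10;1;7;5;3;9;0;2;4;8;6;12;11]; [::12;8;10;3;1;5;2;7;11;4;0;6;9]; [::11;1;12;5;0;4;6;8;9;7;2;10;3]];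
  [:: [::4;12;6;2;8;9;5;3;11;10;0;7;1]; [::11;6;10;8;12;7;4;9;2;0;3;1;5]; [::12;5;10;11;9;6;8;1;3;0;7;4;2]];
  [:: [::10;8;12;1;3;11;5;9;7;0;6;4;2]; [::2;6;8;4;10;11;0;12;9;3;5;7;1]; [::10;1;6;0;9;4;7;2;12;5;3;8;11]];
  [:: [::4;11;12;9;3;7;2;10;1;8;6;5;0]; [::10;0;4;6;12;2;11;7;5;8;3;9;1]; [::3;6;9;1;5;12;0;11;8;10;2;7;4]];
  [:: [::9;12;1;5;3;6;8;10;0;4;11;2;7]; [::11;7;0;4;9;1;3;12;2;5;10;8;6]; [::1;4;7;5;9;2;6;10;11;12;8;0;3]];
  [:: [::10;6;12;2;8;1;11;4;0;5;3;7;9]; [::11;2;0;5;9;1;4;10;3;12;7;8;6]; [::6;8;9;3;12;10;7;5;1;0;11;2;4]];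
  [:: [::4;7;2;10;12;11;9;6;1;0;3;5;8]; [::4;6;8;3;7;0;12;5;11;10;9;2;1]; [::6;3;11;8;9;1;10;7;12;5;4;0;2]];
  [:: [::9;11;2;10;0;12;5;1;8;7;6;3;4]; [::2;12;11;10;5;0;4;6;9;8;1;7;3]; [::7;1;11;8;2;0;9;10;12;6;4;5;3]];
  [:: [::4;9;7;2;11;8;6;3;10;1;5;0;12]; [::12;7;0;2;10;6;4;1;3;11;9;8;5]; [::8;12;11;10;5;1;6;9;3;7;0;2;4]];
  [:: [::5;1;9;0;2;10;8;11;7;4;6;3;12]; [::8;9;6;12;1;3;10;11;5;0;2;4;7]; [::8;6;10;7;2;12;11;9;4;5;0;1;3]];
  [:: [::4;8;2;12;11;1;10;6;9;7;5;0;3]; [::11;8;6;2;0;10;4;12;5;9;3;7;1]; [::12;6;0;9;10;7;2;11;3;5;1;8;4]];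
  [:: [::12;3;10;5;0;9;1;7;11;8;6;2;4]; [::9;11;5;8;2;0;12;10;7;1;4;3;6]; [::5;1;6;12;4;0;3;8;9;11;10;2;7]];
  [:: [::7;5;0;2;10;9;11;12;1;4;6;3;8]; [::3;10;6;12;4;9;8;5;11;1;7;0;2]; [::1;10;12;9;3;8;6;11;4;5;2;7;0]];
  [:: [::5;7;10;12;3;1;6;2;0;4;8;9;11]; [::1;7;4;12;11;0;6;8;5;9;2;10;3]; [::3;11;8;1;9;10;0;12;6;2;4;7;5]];
  [:: [::4;0;3;7;12;2;8;9;10;11;1;5;6]; [::5;8;12;3;6;9;1;11;10;7;0;2;4]; [::6;1;3;10;2;0;11;12;4;9;8;5;7]];
  [:: [::6;9;3;8;11;2;5;7;12;10;1;0;4]; [::7;4;6;11;12;10;9;1;3;2;5;8;0]; [::4;8;6;1;10;2;7;9;0;3;11;5;12]];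
  [:: [::8;12;10;2;11;4;1;9;6;3;7;0;5]; [::3;11;8;2;12;5;0;10;7;1;6;4;9]; [::0;4;7;5;10;8;1;6;3;2;9;12;11]];
  [:: [::3;5;7;12;2;4;1;10;11;9;0;6;8]; [::1;3;8;6;0;10;2;7;9;12;4;5;11]; [::5;1;11;0;9;6;4;8;12;3;2;10;7]];
  [:: [::7;0;6;1;10;2;11;8;12;4;3;5;9]; [::6;2;8;3;0;11;5;9;4;1;7;12;10]; [::4;2;9;12;5;7;11;3;10;6;8;0;1]];
  [:: [::5;11;9;7;3;6;12;4;2;0;10;8;1]; [::9;1;8;3;10;0;2;11;6;12;7;4;5]; [::7;10;4;1;3;5;0;11;12;6;9;8;2]];
  [:: [::5;9;1;12;2;8;11;10;7;6;4;3;0]; [::9;4;2;6;3;10;1;7;11;5;0;12;8]; [::12;8;6;10;0;9;3;7;4;11;1;2;5]];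
  [:: [::5;11;2;9;7;4;10;0;12;6;8;1;3]; [::3;8;9;12;1;6;10;2;5;0;4;11;7]; [::12;4;9;0;5;8;11;6;2;10;1;7;3]];
  [:: [::4;0;3;6;1;12;7;5;2;11;9;10;8]; [::8;12;0;2;6;4;7;3;1;9;5;11;10]; [::5;12;6;0;7;2;8;4;1;10;3;9;11]];
  [:: [::8;5;2;9;1;3;11;10;12;6;7;0;4]; [::0;9;5;11;7;2;4;8;3;6;12;10;1]; [::3;10;8;2;6;1;12;0;5;7;4;9;11]];
  [:: [::7;5;11;0;6;4;10;12;1;2;8;9;3]; [::9;12;4;8;6;3;11;7;0;5;2;10;1]; [::11;4;1;3;7;12;2;6;9;0;10;5;8]];
  [:: [::12;9;3;1;6;4;10;5;8;11;7;0;2]; [::0;7;12;11;1;5;2;10;6;9;8;3;4]; [::10;11;8;2;6;12;4;9;0;5;7;1;3]];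
  [:: [::0;3;9;11;4;2;12;8;5;1;7;10;6]; [::12;5;11;0;6;8;9;10;7;4;1;2;3]; [::12;0;2;8;3;11;10;1;9;5;6;4;7]];
  [:: [::7;12;0;3;1;9;2;5;11;6;8;4;10]; [::10;11;8;2;7;5;3;12;9;0;4;6;1]; [::5;0;7;4;1;12;6;2;10;8;11;9;3]];
  [:: [::6;9;4;10;11;0;3;1;12;7;2;8;5]; [::1;10;9;12;8;6;4;7;5;0;11;3;2]; [::2;7;3;5;8;4;12;0;9;1;11;10;6]];
  [:: [::10;5;3;11;9;4;12;8;6;0;2;1;7]; [::2;0;5;1;9;10;11;4;7;8;3;12;6]; [::6;3;8;1;10;2;5;12;0;9;4;11;7]];
  [:: [::5;12;8;9;6;1;3;11;2;7;0;4;10]; [::11;6;8;1;10;12;3;7;4;0;9;2;5]; [::3;8;2;7;1;4;12;9;5;11;0;6;10]];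
  [:: [::7;3;0;4;9;1;6;11;5;8;12;2;10]; [::8;1;12;10;3;5;0;9;11;7;6;4;2]; [::10;9;2;12;5;1;7;4;11;3;8;6;0]];
  [:: [::2;0;10;8;4;6;11;9;7;12;3;5;1]; [::1;3;10;9;5;11;8;6;12;2;4;7;0]; [::12;2;6;10;11;7;5;8;9;1;4;0;3]];
  [:: [::1;4;10;0;11;6;2;5;7;9;8;3;12]; [::2;7;9;5;12;1;11;8;10;0;3;6;4]; [::1;6;3;0;12;7;4;9;8;5;10;11;2]];
  [:: [::9;0;6;3;11;5;8;4;2;7;12;10;1]; [::12;11;7;1;5;0;4;10;6;2;8;3;9]; [::3;7;12;5;2;11;4;1;9;6;10;0;8]];
  [:: [::10;11;1;6;9;12;2;7;3;8;5;0;4]; [::8;3;12;11;9;10;5;0;4;1;7;2;6]; [::5;3;1;9;4;10;12;6;11;7;8;2;0]];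
  [:: [::2;12;1;8;11;0;3;5;9;10;6;4;7]; [::11;3;12;10;1;6;0;9;4;2;5;7;8]; [::8;5;11;7;4;12;6;2;10;3;9;1;0]];
  [:: [::11;10;2;8;1;9;12;6;3;5;0;7;4]; [::8;4;11;12;5;9;6;0;3;7;1;10;2]; [::10;1;4;7;0;9;8;12;3;2;11;5;6]];
  [:: [::11;8;4;0;10;7;1;5;12;3;2;9;6]; [::6;3;7;5;11;9;1;10;2;12;0;8;4]; [::0;3;10;6;8;12;9;4;11;2;7;1;5]];
  [:: [::11;2;10;1;6;12;3;9;4;0;5;7;8]; [::10;4;8;11;7;9;12;0;6;1;2;5;3]; [::5;0;11;3;10;12;8;2;7;9;4;1;6]];
  [:: [::5;7;12;9;6;1;11;8;2;3;0;10;4]; [::1;9;7;0;6;12;3;11;10;8;5;2;4]; [::5;12;10;2;0;3;9;4;11;6;8;1;7]];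
  [:: [::3;5;8;4;7;9;12;6;10;1;11;2;0]; [::8;2;0;7;10;4;6;3;9;11;12;1;5]; [::10;11;7;12;0;9;1;3;8;5;2;4;6]];
  [:: [::2;9;11;4;12;0;5;10;7;8;6;1;3]; [::4;1;9;10;8;3;7;0;6;2;12;5;11]; [::7;1;8;11;2;12;6;10;4;0;5;9;3]];
  [:: [::7;10;6;0;12;5;8;2;11;4;1;3;9]; [::12;7;9;2;5;10;11;6;8;4;3;1;0]; [::9;3;6;4;2;10;1;8;11;5;0;12;7]];
  [:: [::10;2;5;3;8;1;4;0;12;11;7;9;6]; [::9;0;7;3;6;10;11;5;12;8;4;2;1]; [::8;2;6;9;1;3;11;7;5;0;10;12;4]];
  [:: [::4;12;10;7;2;9;1;11;8;0;5;3;6]; [::6;4;9;5;11;0;3;12;2;10;8;7;1]; [::12;6;8;3;1;10;11;7;0;5;2;9;4]];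
  [:: [::2;6;1;12;5;9;0;10;4;7;8;3;11]; [::0;2;9;1;3;10;7;5;11;4;6;12;8]; [::10;5;3;8;11;2;7;0;12;4;9;1;6]];
  [:: [::5;1;12;7;11;0;10;8;9;3;6;4;2]; [::10;11;4;8;2;9;12;0;3;6;7;1;5]; [::2;12;11;9;6;1;7;5;0;10;8;3;4]];
  [:: [::12;11;9;8;5;7;4;0;6;10;1;2;3]; [::10;2;8;12;4;9;0;7;3;11;5;1;6]; [::3;8;6;4;2;7;10;12;5;1;11;9;0]];
  [:: [::6;3;0;2;11;10;8;1;4;5;9;7;12]; [::11;4;9;2;10;12;0;7;1;8;6;3;5]; [::2;6;11;7;3;9;12;5;8;10;1;0;4]];
  [:: [::12;9;1;11;4;6;0;2;5;7;10;8;3]; [::5;11;2;7;0;3;8;12;10;4;9;6;1]; [::6;8;1;12;7;11;0;9;3;10;4;5;2]];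
  [:: [::5;3;11;7;0;4;2;9;1;10;12;6;8]; [::5;2;12;10;6;4;1;11;9;7;8;3;0]; [::3;1;6;12;4;8;11;10;7;2;9;0;5]];
  [:: [::0;5;9;2;11;8;12;4;7;6;10;3;1]; [::6;9;1;12;0;10;11;7;3;8;5;4;2]; [::4;8;5;10;6;11;3;12;2;0;7;1;9]];
  [:: [::12;0;2;9;10;5;1;3;6;11;4;8;7]; [::6;0;11;8;10;7;1;9;4;2;12;3;5]; [::10;0;9;11;1;8;12;5;2;6;4;7;3]];
  [:: [::2;0;5;1;6;8;10;12;4;11;7;3;9]; [::9;3;5;7;10;0;11;2;8;4;12;6;1]; [::5;12;11;6;9;7;4;10;2;1;0;3;8]];
  [:: [::8;2;10;7;3;12;11;1;4;6;0;9;5]; [::9;4;6;1;10;12;5;0;2;11;3;8;7]; [::0;3;8;9;1;7;2;12;4;10;11;5;6]];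
  [:: [::6;12;10;0;3;8;4;9;2;11;1;5;7]; [::5;2;0;4;11;10;9;6;3;12;7;1;8]; [::8;10;4;7;1;5;11;9;12;2;6;0;3]];
  [:: [::8;11;1;3;5;12;7;10;9;0;2;4;6]; [::0;10;12;4;9;7;1;5;2;8;11;6;3]; [::0;5;11;12;8;10;6;2;9;3;1;4;7]];
  [:: [::5;11;12;3;8;4;10;6;9;1;0;2;7]; [::1;4;2;6;11;9;12;0;7;8;10;3;5]; [::8;2;11;7;10;0;5;3;9;12;6;1;4]];
  [:: [::9;2;11;12;7;1;6;3;0;10;8;5;4]; [::8;9;11;5;0;4;10;6;2;7;3;1;12]; [::0;2;12;1;8;3;7;9;10;5;6;4;11]];
  [:: [::9;8;10;0;7;11;12;2;5;4;1;6;3]; [::4;9;2;7;12;1;5;8;6;3;0;10;11]; [::11;5;0;2;10;6;3;12;9;4;7;8;1]];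
  [:: [::12;10;1;4;6;3;0;2;7;5;9;8;11]; [::10;6;1;7;3;5;2;4;0;12;8;9;11]; [::6;2;11;1;3;10;5;0;9;4;7;12;8]];
  [:: [::5;10;9;6;3;12;0;11;7;1;2;4;8]; [::12;10;0;3;7;4;11;6;1;2;5;8;9]; [::3;8;6;4;0;9;5;2;11;10;12;1;7]];
  [:: [::9;3;0;4;8;2;5;10;1;11;7;6;12]; [::0;2;4;1;3;12;10;6;11;8;9;7;5]; [::9;4;12;5;1;8;11;7;10;3;2;6;0]];
  [:: [::2;8;4;9;6;1;3;10;11;0;12;7;5]; [::7;10;6;0;4;12;8;5;2;11;1;3;9]; [::8;6;4;11;1;12;2;9;3;10;7;5;0]];
  [:: [::7;9;12;5;11;6;0;10;1;4;8;3;2]; [::4;10;3;12;7;11;8;9;1;2;0;5;6]; [::3;6;4;12;11;2;10;7;0;9;5;1;8]];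
  [:: [::9;3;6;1;4;2;12;11;0;7;8;5;10]; [::4;11;9;7;1;8;12;0;6;10;5;2;3]; [::4;0;7;12;1;11;2;9;8;3;10;6;5]];
  [:: [::9;1;12;3;11;10;5;2;8;7;6;4;0]; [::4;11;9;7;2;6;1;3;10;8;0;5;12]; [::7;12;10;9;2;0;3;5;11;6;1;8;4]];
  [:: [::8;9;11;12;4;2;5;1;10;6;7;0;3]; [::10;5;0;12;3;1;11;2;9;7;6;8;4]; [::10;2;7;0;6;8;12;1;4;3;9;11;5]];
  [:: [::4;12;10;2;11;9;6;3;1;5;8;0;7]; [::12;7;3;8;1;10;0;5;2;4;6;9;11]; [::8;4;7;10;11;12;5;9;2;0;1;6;3]];
  [:: [::4;2;5;12;9;1;3;11;8;6;0;7;10]; [::3;0;5;7;2;12;1;6;10;8;4;11;9]; [::7;3;5;9;0;2;6;12;11;4;8;1;10]];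
  [:: [::4;7;12;9;6;0;5;11;8;10;2;3;1]; [::12;5;10;6;2;7;9;1;11;3;0;4;8]; [::1;8;3;10;7;0;9;2;5;4;6;11;12]];
  [:: [::5;8;9;11;7;12;6;3;0;10;1;2;4]; [::4;11;12;8;3;7;0;10;6;9;1;2;5]; [::7;4;8;10;11;6;0;12;5;1;9;2;3]];
  [:: [::2;4;10;1;9;0;3;11;6;8;5;7;12]; [::2;10;0;11;5;8;4;7;12;1;6;3;9]; [::3;7;10;8;2;0;4;6;1;9;12;5;11]];
  [:: [::8;9;4;11;0;2;10;12;1;7;6;3;5]; [::3;12;8;2;11;1;6;4;0;10;7;9;5]; [::9;3;8;5;2;4;7;11;10;12;1;0;6]];
  [:: [::10;8;4;7;9;0;3;12;6;1;5;2;11]; [::1;8;2;6;4;9;11;3;10;5;0;12;7]; [::12;1;5;0;2;10;7;11;4;3;6;9;8]];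
  [:: [::11;1;5;9;12;0;2;10;7;6;4;8;3]; [::4;2;9;3;12;6;10;8;11;0;5;7;1]; [::6;1;10;12;8;5;11;0;3;9;2;7;4]];
  [:: [::12;5;0;10;3;6;1;11;8;9;4;2;7]; [::1;10;6;4;0;2;8;9;3;5;11;7;12]; [::11;6;8;3;5;1;4;10;2;12;9;7;0]];
  [:: [::10;3;11;6;12;4;7;9;0;1;8;5;2]; [::0;7;3;1;10;12;2;8;6;11;9;5;4]; [::9;1;7;11;12;5;8;10;6;0;3;4;2]];
  [:: [::2;0;9;10;11;6;8;1;12;3;4;7;5]; [::3;12;7;5;11;4;2;9;1;6;8;0;10]; [::1;6;3;10;4;9;5;0;7;8;12;11;2]];
  [:: [::12;5;9;8;3;11;6;2;7;4;10;1;0]; [::10;6;1;12;3;7;5;2;11;0;4;9;8]; [::11;7;4;9;1;5;10;0;12;3;6;8;2]];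
  [:: [::9;0;11;2;7;1;12;5;8;4;6;10;3]; [::12;8;6;9;4;11;3;0;2;1;10;5;7]; [::1;5;11;9;2;10;4;6;3;0;7;12;8]];
  [:: [::10;4;1;7;3;11;9;6;12;8;2;5;0]; [::10;1;6;0;4;7;12;11;2;5;3;8;9]; [::8;5;7;9;3;1;12;2;6;11;0;4;10]];
  [:: [::6;2;7;4;0;11;5;3;9;12;8;1;10]; [::3;7;11;1;9;2;0;6;10;4;8;12;5]; [::2;4;11;3;1;8;10;7;12;0;5;9;6]];
  [:: [::8;1;9;12;5;2;0;4;10;11;7;3;6]; [::8;6;0;10;12;2;7;1;4;11;5;9;3]; [::2;9;11;6;10;7;5;3;8;1;4;12;0]];
  [:: [::3;8;4;1;6;9;7;12;11;5;10;2;0]; [::3;6;4;0;2;7;1;9;5;10;12;11;8]; [::0;7;4;9;2;6;8;1;12;10;11;3;5]];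
  [:: [::10;5;9;2;4;8;6;11;1;12;0;3;7]; [::7;10;8;12;6;3;5;2;11;0;1;9;4]; [::7;3;8;5;0;10;9;6;1;2;11;4;12]];
  [:: [::12;0;5;1;10;3;7;11;4;9;2;6;8]; [::2;8;12;1;9;7;10;4;6;0;11;5;3]; [::9;5;11;1;8;4;7;12;3;6;0;2;10]];
  [:: [::10;8;3;6;12;4;1;9;2;11;0;5;7]; [::1;12;5;2;0;4;8;11;10;9;3;6;7]; [::9;3;10;0;6;11;5;7;12;1;4;8;2]];
  [:: [::12;6;4;1;8;11;5;9;2;0;3;7;10]; [::4;0;12;7;5;2;8;3;11;6;9;1;10]; [::10;8;12;4;9;3;7;1;5;0;2;11;6]];
  [:: [::1;12;11;2;10;7;9;6;4;5;8;0;3]; [::5;3;9;2;6;12;10;11;8;0;1;4;7]; [::4;7;2;12;3;8;1;9;11;0;5;6;10]];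
  [:: [::0;7;10;11;12;1;6;3;5;4;8;9;2]; [::0;12;4;2;9;1;8;11;6;7;10;3;5]; [::11;5;9;10;4;6;8;3;0;1;2;7;12]];
  [:: [::7;0;12;5;2;10;3;9;11;1;4;6;8]; [::12;3;6;9;4;1;7;5;10;0;2;8;11]; [::8;3;1;5;9;2;11;12;6;7;4;0;10]];
  [:: [::5;2;11;7;12;6;4;0;3;1;9;10;8]; [::8;9;6;11;0;10;4;12;3;5;2;7;1]; [::2;9;1;3;11;5;10;6;0;4;8;12;7]];
  [:: [::9;6;11;1;12;2;5;7;10;4;3;0;8]; [::10;5;3;11;2;0;7;9;12;6;8;1;4]; [::6;4;1;9;0;12;7;11;8;5;10;2;3]];
  [:: [::9;4;1;7;12;8;2;6;0;3;5;10;11]; [::10;5;8;6;9;12;4;2;11;0;3;7;1]; [::10;7;2;5;11;1;8;4;6;0;12;3;9]];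
  [:: [::1;5;0;9;2;4;7;3;12;6;8;11;10]; [::4;0;2;12;9;11;3;6;10;7;1;5;8]; [::11;4;1;7;5;9;10;12;8;2;6;3;0]];
  [:: [::5;11;1;6;12;0;3;9;2;4;10;7;8]; [::2;0;9;11;10;3;6;4;12;1;5;8;7]; [::4;9;1;10;7;2;8;5;0;6;11;3;12]];
  [:: [::2;0;7;12;4;1;5;3;6;9;11;10;8]; [::12;5;9;4;0;6;1;11;10;8;7;3;2]; [::1;8;5;0;9;6;4;2;12;10;11;7;3]];
  [:: [::10;11;4;9;7;3;5;8;12;0;6;1;2]; [::10;4;8;6;1;12;0;5;7;9;2;3;11]; [::11;8;3;9;6;2;12;7;1;0;10;5;4]];
  [:: [::3;10;2;7;11;4;1;9;0;8;6;5;12]; [::8;9;7;1;3;12;2;5;10;4;0;6;11]; [::10;11;1;8;4;2;6;0;12;5;3;7;9]];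
  [:: [::6;2;7;4;1;10;5;9;8;12;0;11;3]; [::0;11;5;3;9;4;2;12;6;1;8;7;10]; [::12;3;0;2;10;11;8;1;9;4;5;6;7]];
  [:: [::8;1;9;10;6;0;7;11;3;2;12;5;4]; [::11;9;5;3;7;4;6;12;10;1;0;8;2]; [::3;10;5;8;11;12;0;2;6;9;1;4;7]];
  [:: [::4;6;8;5;7;2;11;3;1;12;10;0;9]; [::1;11;5;0;7;3;10;2;6;9;4;8;12]; [::8;4;2;0;10;5;3;6;11;12;7;1;9]];
  [:: [::4;10;7;2;9;11;5;3;1;12;6;0;8]; [::3;9;5;10;1;12;2;4;8;6;0;7;11]; [::11;12;0;4;7;3;10;2;6;8;1;5;9]];
  [:: [::2;12;10;3;6;4;7;5;9;11;8;1;0]; [::6;2;8;3;0;10;9;12;11;1;4;5;7]; [::2;11;10;8;9;0;12;1;7;5;4;6;3]];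
  [:: [::2;9;12;11;0;6;1;7;5;10;8;4;3]; [::11;9;1;3;12;8;10;4;2;6;5;7;0]; [::1;8;5;12;6;4;7;11;10;9;0;2;3]];
  [:: [::10;5;2;9;12;4;7;3;6;1;11;0;8]; [::2;7;0;6;11;4;1;3;10;12;5;8;9]; [::0;2;11;7;9;10;8;12;3;5;6;4;1]];
  [:: [::9;6;11;8;12;1;10;4;7;2;3;0;5]; [::10;9;2;7;5;11;4;12;0;3;6;8;1]; [::3;0;2;10;7;12;5;9;11;6;1;4;8]];
  [:: [::8;6;3;7;9;1;11;0;2;5;10;4;12]; [::9;3;1;8;4;11;5;0;6;12;7;2;10]; [::12;10;3;0;4;9;11;2;5;8;6;1;7]];
  [:: [::9;2;8;12;11;3;7;4;1;0;10;5;6]; [::10;11;0;7;12;4;8;6;9;1;2;3;5]; [::12;10;3;6;0;9;11;1;5;7;8;2;4]];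
  [:: [::1;5;7;2;12;11;8;3;9;4;6;0;10]; [::2;10;8;5;9;4;11;0;6;1;3;12;7]; [::10;0;12;7;3;5;11;6;1;8;9;4;2]];
  [:: [::11;7;9;8;12;10;5;1;3;6;2;0;4]; [::1;10;2;5;0;11;8;3;7;12;6;4;9]; [::6;2;7;10;9;1;8;5;3;0;12;4;11]];
  [:: [::3;8;9;10;4;7;2;11;6;12;5;0;1]; [::12;3;7;1;10;0;9;6;4;5;8;2;11]; [::1;11;10;6;8;5;7;12;9;0;2;3;4]];
  [:: [::3;12;2;6;10;8;4;11;9;7;1;0;5]; [::9;8;5;12;0;11;1;4;10;2;6;3;7]; [::5;9;7;11;3;10;12;8;1;0;2;4;6]];
  [:: [::12;9;4;0;6;1;8;5;10;7;2;11;3]; [::0;11;5;9;8;10;3;12;2;7;1;6;4]; [::3;7;4;1;10;9;6;12;11;5;8;2;0]];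
  [:: [::1;9;3;6;2;0;7;10;8;12;4;5;11]; [::2;4;6;12;0;11;7;9;5;3;8;1;10]; [::7;5;12;1;4;0;6;8;2;10;3;9;11]];
  [:: [::2;6;0;4;12;10;5;7;9;8;11;3;1]; [::11;7;10;1;3;5;2;4;6;12;8;9;0]; [::11;0;5;8;9;10;2;12;1;3;4;6;7]];
  [:: [::10;5;1;7;4;6;2;12;0;3;11;9;8]; [::12;5;8;2;9;1;4;11;3;6;10;7;0]; [::7;5;11;6;0;3;1;10;9;8;12;4;2]];
  [:: [::9;1;12;0;11;10;6;8;2;3;4;7;5]; [::8;11;1;4;7;5;9;6;3;2;10;0;12]; [::0;4;10;7;3;9;11;2;6;5;8;1;12]];
  [:: [::0;6;9;1;10;11;12;3;7;8;5;4;2]; [::6;4;7;2;8;12;10;0;3;9;11;5;1]; [::3;9;4;11;5;0;12;6;1;10;8;7;2]];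
  [:: [::8;9;5;7;2;12;3;11;1;4;10;6;0]; [::9;2;4;10;8;6;3;5;12;7;0;11;1]; [::2;6;9;10;1;4;8;12;0;3;11;7;5]];
  [:: [::8;10;11;3;9;2;7;0;6;12;4;5;1]; [::6;9;11;0;3;10;2;12;4;1;8;5;7]; [::12;11;4;7;10;9;1;5;3;0;6;8;2]];
  [:: [::8;1;10;9;3;11;7;4;2;12;5;6;0]; [::7;9;12;3;8;6;11;5;10;2;4;0;1]; [::4;0;2;9;1;3;10;11;12;6;8;7;5]];
  [:: [::10;5;11;1;8;9;4;12;3;7;0;2;6]; [::9;12;10;0;5;7;4;6;2;11;8;3;1]; [::9;10;4;2;11;8;12;1;6;5;3;7;0]];
  [:: [::8;4;9;2;10;12;1;3;6;7;11;0;5]; [::2;7;9;5;1;8;10;0;12;6;4;11;3]; [::10;5;8;9;3;7;4;6;1;2;12;11;0]];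
  [:: [::5;11;10;8;12;6;2;9;7;0;3;4;1]; [::2;8;1;6;3;5;9;12;0;4;11;10;7]; [::5;10;12;1;7;2;11;9;0;6;4;3;8]];
  [:: [::5;8;9;6;1;4;12;11;7;2;10;3;0]; [::4;2;10;9;12;1;11;5;0;8;3;7;6]; [::7;4;8;11;6;2;0;12;3;5;9;10;1]];
  [:: [::6;4;2;12;7;0;9;3;10;11;8;5;1]; [::8;1;11;2;5;10;4;9;12;7;3;0;6]; [::11;0;5;1;6;3;8;9;7;10;12;4;2]];
  [:: [::10;6;4;1;5;9;7;11;8;12;3;0;2]; [::3;7;12;11;5;8;9;6;1;2;0;10;4]; [::3;5;10;7;1;11;4;0;9;12;6;8;2]];
  [:: [::8;5;0;4;7;10;9;11;6;2;3;12;1]; [::8;1;11;2;5;3;0;12;4;7;9;10;6]; [::9;12;2;4;11;3;10;1;7;8;0;5;6]];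
  [:: [::0;4;11;6;3;5;12;2;9;8;7;1;10]; [::6;10;3;8;9;4;7;0;12;2;11;1;5]; [::7;11;8;12;1;10;0;2;5;3;6;9;4]];
  [:: [::6;10;4;8;9;12;7;5;0;3;1;11;2]; [::8;10;9;2;0;7;4;11;3;5;12;1;6]; [::10;2;4;12;3;6;9;11;1;8;5;7;0]];
  [:: [::12;11;6;3;10;5;7;2;0;4;9;8;1]; [::9;3;7;11;10;4;6;12;8;5;2;0;1]; [::6;0;11;2;5;9;10;1;8;7;3;12;4]];
  [:: [::6;1;10;0;3;8;4;7;12;9;11;2;5]; [::4;12;2;6;11;0;7;3;10;9;5;1;8]; [::7;10;2;8;6;0;12;3;9;5;4;1;11]];
  [:: [::0;6;1;10;3;7;12;11;9;8;2;5;4]; [::11;5;0;4;9;12;6;2;7;10;3;8;1]; [::9;7;5;8;10;2;11;0;3;1;4;6;12]];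
  [:: [::3;12;5;2;11;6;4;8;9;1;0;10;7]; [::10;12;1;3;7;5;8;11;9;6;4;0;2]; [::6;12;2;7;10;3;11;1;9;0;8;5;4]];
  [:: [::12;6;3;9;2;4;10;0;5;1;7;8;11]; [::1;10;3;5;11;4;6;9;7;2;8;0;12]; [::2;7;3;12;4;1;8;9;0;6;5;11;10]];
  [:: [::2;10;0;5;7;3;9;8;4;11;12;1;6]; [::5;11;0;4;9;7;12;3;8;2;6;1;10]; [::10;6;8;2;0;12;9;1;11;5;3;7;4]];
  [:: [::1;12;11;4;2;5;10;9;7;3;0;8;6]; [::10;4;0;5;12;9;8;11;3;7;1;2;6]; [::6;3;9;0;11;2;7;12;4;8;1;10;5]];
  [:: [::12;7;4;11;0;6;1;3;9;5;8;2;10]; [::10;9;5;12;6;4;2;7;1;11;3;8;0]; [::6;8;9;7;11;12;4;10;3;1;0;5;2]];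
  [:: [::11;9;2;10;12;0;7;1;4;8;3;6;5]; [::9;1;6;2;8;12;11;5;7;0;3;10;4]; [::2;12;6;3;10;4;8;1;11;5;9;7;0]];
  [:: [::6;12;7;9;0;10;8;4;1;11;2;3;5]; [::12;5;1;7;2;11;6;3;8;9;0;4;10]; [::3;12;10;11;9;6;2;0;7;1;4;8;5]];
  [:: [::6;4;2;11;0;7;5;8;1;10;9;3;12]; [::6;0;4;9;12;3;11;5;2;1;8;7;10]; [::11;6;3;0;2;12;1;10;9;5;7;8;4]];
  [:: [::6;8;1;5;12;9;4;2;0;10;7;3;11]; [::1;9;7;5;0;12;4;8;3;11;2;6;10]; [::8;9;6;4;1;7;0;10;12;11;5;2;3]];
  [:: [::7;11;4;1;9;6;10;3;12;0;2;5;8]; [::4;10;8;9;2;6;1;11;12;3;5;7;0]; [::8;3;9;12;2;10;7;0;4;11;5;6;1]];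
  [:: [::7;5;9;10;4;8;6;12;3;1;11;2;0]; [::11;0;10;2;4;9;12;1;3;6;7;8;5]; [::9;2;11;1;6;0;7;10;8;3;4;12;5]];
  [:: [::4;0;2;8;11;5;10;6;9;12;3;7;1]; [::4;1;9;12;3;5;7;10;2;8;6;11;0]; [::9;5;8;12;7;0;10;1;11;3;4;2;6]];
  [:: [::10;3;7;1;9;8;12;0;5;4;2;11;6]; [::7;5;2;4;12;3;1;10;9;6;0;11;8]; [::9;0;6;8;10;4;7;12;2;1;5;11;3]];
  [:: [::3;11;10;12;1;4;7;5;9;6;8;2;0]; [::3;12;2;6;10;9;8;11;0;5;1;4;7]; [::12;0;2;9;11;1;5;10;7;4;6;8;3]];
  [:: [::6;9;7;2;4;0;3;5;1;8;11;12;10]; [::4;12;10;0;5;8;9;2;11;7;3;6;1]; [::3;8;12;7;11;0;6;4;10;1;2;5;9]];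
  [:: [::4;8;3;1;7;2;12;9;10;11;6;5;0]; [::2;10;8;5;0;3;6;9;11;1;7;12;4]; [::12;3;5;2;0;7;11;4;1;9;10;8;6]];
  [:: [::12;7;11;8;10;0;6;9;2;5;3;1;4]; [::9;7;1;6;11;3;0;12;8;4;5;10;2]; [::5;9;12;6;3;10;7;4;2;1;0;11;8]];
  [:: [::8;10;1;9;0;11;5;3;6;4;2;12;7]; [::0;4;8;12;2;10;5;1;6;3;9;11;7]; [::4;12;5;7;2;8;11;3;1;9;6;0;10]];
  [:: [::0;3;7;10;12;6;8;1;5;4;9;2;11]; [::10;2;6;3;8;5;11;12;0;9;7;4;1]; [::10;8;4;0;9;5;2;11;3;1;12;7;6]];
  [:: [::0;9;10;11;12;7;4;2;5;3;6;8;1]; [::3;8;12;0;4;1;10;7;9;6;5;2;11]; [::2;9;11;8;10;3;0;6;12;1;7;4;5]];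
  [:: [::10;6;11;5;0;3;7;12;8;2;9;1;4]; [::6;2;7;10;0;12;11;4;9;1;5;3;8]; [::9;5;10;4;12;3;1;11;7;2;6;0;8]];
  [:: [::2;7;10;0;12;9;8;1;6;5;3;11;4]; [::3;9;4;7;12;11;10;8;6;2;5;0;1]; [::5;10;9;0;7;3;11;1;12;4;6;8;2]];
  [:: [::3;1;8;2;4;9;5;0;10;6;11;12;7]; [::0;4;11;9;6;12;3;7;2;1;5;8;10]; [::7;5;1;10;11;6;4;12;0;2;9;8;3]];
  [:: [::9;7;10;2;8;1;6;12;4;11;0;5;3]; [::9;6;11;0;12;7;3;5;1;2;10;8;4]; [::4;8;3;12;1;7;5;10;6;11;2;9;0]];
  [:: [::9;5;3;1;12;8;2;6;11;10;4;7;0]; [::2;5;12;11;1;9;3;7;0;6;8;10;4]; [::12;3;8;6;10;7;5;11;2;1;9;0;4]];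
  [:: [::3;10;1;4;8;11;7;12;5;0;9;6;2]; [::10;5;9;11;12;8;2;0;6;3;7;4;1]; [::3;9;7;2;12;0;4;6;11;5;8;1;10]];
  [:: [::4;6;2;11;0;10;9;1;7;12;3;5;8]; [::3;0;7;5;2;9;4;11;10;12;1;8;6]; [::1;11;5;3;9;8;2;7;12;4;0;10;6]];
  [:: [::1;7;0;2;5;8;11;3;9;6;4;12;10]; [::9;2;4;12;5;11;0;3;7;1;6;8;10]; [::6;3;12;7;2;11;4;9;8;0;1;5;10]];
  [:: [::9;7;0;3;8;11;10;12;1;2;4;6;5]; [::12;5;2;7;1;3;11;0;6;9;4;10;8]; [::9;4;10;0;2;11;12;7;3;8;5;1;6]];
  [:: [::11;4;8;1;10;0;12;5;3;7;2;6;9]; [::0;6;10;5;1;7;11;9;2;4;3;8;12]; [::6;9;0;4;12;8;10;11;2;5;1;7;3]];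
  [:: [::9;2;5;10;3;11;7;1;4;6;8;0;12]; [::8;5;1;12;3;0;2;4;11;9;7;10;6]; [::11;5;0;9;6;1;8;10;12;7;3;4;2]];
  [:: [::9;3;8;11;10;6;1;12;5;2;0;4;7]; [::2;4;12;7;11;1;5;0;6;8;9;10;3]; [::3;12;10;8;5;2;7;9;6;0;11;1;4]];
  [:: [::9;10;3;8;1;7;11;6;12;0;2;5;4]; [::11;3;12;8;4;1;10;2;0;9;5;7;6]; [::7;5;8;2;6;9;4;10;12;11;0;1;3]];
  [:: [::0;12;6;1;9;11;3;8;2;4;10;5;7]; [::6;2;5;12;4;9;10;7;0;11;8;3;1]; [::6;9;5;11;7;4;10;0;3;8;1;12;2]];
  [:: [::5;12;3;9;7;1;10;11;2;4;8;0;6]; [::6;3;8;2;9;0;7;12;11;5;10;1;4]; [::2;6;1;3;7;10;8;9;4;12;0;11;5]];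
  [:: [::1;9;10;5;3;7;11;4;8;6;2;0;12]; [::2;7;10;4;0;3;12;1;6;11;9;8;5]; [::5;12;8;2;10;6;11;9;0;1;4;3;7]];
  [:: [::5;8;12;6;10;4;9;1;3;0;2;7;11]; [::10;5;1;8;6;11;2;4;12;9;3;7;0]; [::0;12;2;10;8;3;11;9;5;1;4;6;7]];
  [:: [::3;8;12;0;11;4;9;6;1;2;10;5;7]; [::12;7;2;5;8;9;0;3;6;11;4;10;1]; [::0;7;10;12;4;1;8;11;6;5;2;9;3]];
  [:: [::4;7;0;11;10;6;8;9;2;1;3;12;5]; [::11;1;10;9;6;0;3;8;4;7;2;5;12]; [::5;12;3;1;9;4;6;2;11;10;0;8;7]];
  [:: [::11;9;7;4;2;12;0;6;10;1;5;8;3]; [::1;5;10;0;11;2;8;4;9;3;7;6;12]; [::4;11;12;1;8;3;6;9;10;7;5;0;2]];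
  [:: [::7;3;11;1;6;8;10;9;4;12;5;2;0]; [::12;4;11;8;3;1;5;10;0;2;9;7;6]; [::0;3;10;4;8;5;12;11;2;6;1;9;7]];
  [:: [::9;3;1;10;8;6;12;5;11;2;4;7;0]; [::10;2;5;9;8;3;12;0;7;11;6;4;1]; [::11;2;6;10;0;3;5;1;4;7;12;8;9]];
  [:: [::11;4;0;10;7;1;3;9;5;8;12;6;2]; [::4;12;6;1;5;8;3;10;2;7;0;11;9]; [::3;12;1;4;9;6;8;11;7;5;2;10;0]];
  [:: [::5;7;2;6;11;4;10;3;12;1;0;8;9]; [::9;3;1;6;12;0;11;10;8;2;7;4;5]; [::1;7;10;9;5;3;8;4;12;0;11;6;2]];
  [:: [::2;7;5;3;8;1;9;6;12;11;10;0;4]; [::0;5;2;11;6;3;9;4;10;7;1;12;8]; [::8;6;1;3;12;7;4;11;9;2;0;10;5]];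
  [:: [::0;3;1;4;6;11;10;12;7;5;8;9;2]; [::12;5;7;9;8;10;0;6;2;11;3;1;4]; [::0;12;1;5;10;6;3;9;11;4;7;2;8]];
  [:: [::2;8;9;5;0;6;3;1;7;11;12;10;4]; [::11;4;7;5;1;10;6;12;9;8;2;3;0]; [::10;7;9;3;8;12;1;6;11;4;5;0;2]];
  [:: [::10;0;4;9;7;12;1;8;6;11;5;2;3]; [::11;3;1;5;10;2;6;12;9;0;7;8;4]; [::4;8;11;2;5;3;6;1;7;10;12;9;0]];
  [:: [::1;9;2;7;5;11;3;12;10;8;4;0;6]; [::9;7;11;2;0;10;3;1;12;5;4;6;8]; [::7;3;9;10;6;8;12;11;1;4;5;2;0]];
  [:: [::12;7;4;0;10;9;3;11;5;8;6;2;1]; [::10;7;0;5;8;9;1;4;12;6;3;11;2]; [::5;7;9;12;11;6;2;8;10;4;0;1;3]];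
  [:: [::7;10;11;8;3;6;2;9;1;4;5;12;0]; [::2;4;11;5;9;12;10;6;8;1;7;3;0]; [::0;11;9;10;1;3;7;12;5;2;4;8;6]];
  [:: [::2;10;4;7;5;1;12;3;11;0;8;6;9]; [::11;8;12;7;2;0;5;9;10;1;4;3;6]; [::6;4;8;1;11;5;3;0;10;12;7;9;2]];
  [:: [::2;10;11;3;12;7;1;5;8;0;9;4;6]; [::6;8;10;12;11;5;7;9;4;1;0;2;3]; [::6;2;7;4;1;10;5;0;3;9;12;8;11]];
  [:: [::11;4;2;0;5;7;1;3;9;12;8;6;10]; [::10;0;4;9;5;2;11;3;6;7;12;1;8]; [::3;0;6;4;7;2;9;1;12;5;11;8;10]];
  [:: [::11;2;9;10;3;8;4;0;7;5;12;1;6]; [::12;10;1;4;6;9;11;0;5;2;3;8;7]; [::5;1;12;2;8;6;0;9;7;11;3;10;4]];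
  [:: [::3;8;1;6;10;5;2;12;0;7;4;9;11]; [::11;1;10;9;5;7;4;2;8;12;0;6;3]; [::11;2;9;7;0;10;12;6;4;5;8;3;1]];
  [:: [::4;11;8;5;1;10;3;9;7;0;2;6;12]; [::9;1;3;0;4;10;2;8;12;5;7;11;6]; [::11;12;7;1;4;2;5;0;10;6;8;3;9]];
  [:: [::1;7;10;9;0;4;12;2;11;6;3;8;5]; [::4;10;3;1;8;6;2;0;11;12;5;9;7]; [::5;8;12;11;6;3;9;7;0;10;4;1;2]];
  [:: [::5;10;4;12;3;8;2;6;9;1;0;11;7]; [::10;11;1;7;3;6;4;2;9;0;5;12;8]; [::6;0;9;3;5;12;7;10;8;2;11;1;4]];
  [:: [::12;11;10;7;9;3;5;8;4;2;1;6;0]; [::2;11;3;6;4;9;12;7;5;8;0;1;10]; [::5;9;8;2;4;7;0;6;1;12;11;10;3]];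
  [:: [::11;2;6;3;8;4;10;7;0;1;12;9;5]; [::0;2;7;4;1;9;8;5;12;11;6;10;3]; [::11;10;5;1;3;7;12;4;9;2;8;6;0]];
  [:: [::1;4;2;7;3;12;10;0;5;11;9;6;8]; [::5;7;12;9;10;6;11;4;8;1;3;0;2]; [::12;6;9;0;11;5;2;8;1;10;7;4;3]];
  [:: [::8;5;7;0;12;4;2;11;3;6;10;1;9]; [::4;0;3;7;11;5;1;10;6;8;2;9;12]; [::0;5;12;11;1;7;10;2;9;6;4;3;8]];
  [:: [::4;6;8;5;3;1;12;11;0;2;7;10;9]; [::7;12;0;10;3;9;6;1;4;5;8;11;2]; [::10;6;12;9;4;11;2;5;1;3;7;0;8]];
  [:: [::6;4;8;5;3;11;7;10;0;2;9;1;12]; [::10;1;12;7;4;9;6;11;5;8;0;3;2]; [::12;2;6;3;7;5;0;9;11;10;1;4;8]];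
  [:: [::9;11;2;0;5;12;10;8;6;1;7;3;4]; [::1;8;5;2;7;10;11;4;12;3;9;6;0]; [::3;9;4;2;12;11;6;1;5;0;8;10;7]];
  [:: [::7;1;12;3;8;2;9;10;11;6;0;5;4]; [::11;4;0;5;8;12;2;7;9;10;3;6;1]; [::11;5;1;4;7;0;10;6;12;2;9;8;3]];
  [:: [::11;6;0;3;10;5;1;12;2;4;9;8;7]; [::5;11;3;9;12;6;8;1;7;4;2;0;10]; [::11;1;10;6;4;9;5;8;12;3;0;7;2]];
  [:: [::12;8;10;2;7;11;4;9;0;5;1;3;6]; [::10;9;12;3;11;1;8;2;5;0;7;4;6]; [::0;7;5;12;10;4;1;3;6;8;2;11;9]];
  [:: [::4;2;7;10;9;5;1;6;11;3;8;12;0]; [::5;2;0;9;7;1;12;3;8;4;6;10;11]; [::12;10;11;0;3;6;9;8;4;5;7;1;2]];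
  [:: [::5;10;7;9;12;8;6;1;11;0;4;2;3]; [::4;0;11;12;3;5;9;8;2;7;10;6;1]; [::3;11;9;2;12;4;1;10;6;7;0;5;8]];
  [:: [::10;12;0;4;9;7;5;8;6;1;11;3;2]; [::8;3;0;6;9;12;11;2;10;4;5;1;7]; [::2;4;8;11;3;5;1;9;0;7;6;12;10]];
  [:: [::11;8;3;5;2;12;6;4;7;10;9;0;1]; [::11;12;4;2;9;0;3;7;5;8;1;6;10]; [::10;9;5;0;12;3;1;6;2;4;7;8;11]];
  [:: [::7;1;5;2;6;12;3;0;9;4;11;10;8]; [::2;4;12;8;11;3;1;6;10;5;9;7;0]; [::10;8;1;9;3;6;0;12;11;7;5;4;2]];
  [:: [::12;11;4;6;2;8;9;5;7;3;1;0;10]; [::12;0;2;4;9;10;6;11;1;8;7;3;5]; [::5;12;2;11;10;8;3;7;1;0;6;4;9]];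
  [:: [::7;1;4;8;6;10;5;0;9;11;3;12;2]; [::12;2;6;11;0;4;10;3;1;5;8;9;7]; [::4;6;1;8;10;9;2;7;11;3;12;5;0]];
  [:: [::4;0;7;12;6;11;5;9;1;2;10;3;8]; [::1;7;5;2;11;3;8;4;12;6;10;9;0]; [::5;3;12;0;11;7;2;9;8;10;6;1;4]];
  [:: [::4;7;3;9;12;1;11;6;2;5;0;8;10]; [::5;3;11;10;8;4;6;9;0;1;7;12;2]; [::7;0;11;5;12;6;3;10;1;2;9;4;8]];
  [:: [::9;8;5;3;6;2;12;0;7;11;4;1;10]; [::8;4;1;7;10;9;0;6;11;3;2;12;5]; [::10;11;3;9;12;4;2;7;5;0;1;6;8]];
  [:: [::10;3;6;4;11;2;7;12;8;1;5;0;9]; [::12;5;0;11;7;4;8;9;2;3;1;6;10]; [::5;11;8;1;6;0;4;10;2;9;7;12;3]];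
  [:: [::4;8;6;3;11;0;2;12;9;1;5;7;10]; [::0;5;1;4;6;10;2;9;3;12;7;8;11]; [::1;7;2;6;12;8;5;10;11;3;4;9;0]];
  [:: [::2;5;1;11;8;12;9;4;6;3;0;7;10]; [::4;2;10;9;7;3;8;5;0;12;6;1;11]; [::10;6;12;0;9;5;7;4;11;1;2;3;8]];
  [:: [::1;12;4;0;11;8;9;5;10;2;7;3;6]; [::2;4;10;7;11;9;3;1;6;5;8;12;0]; [::3;11;1;5;2;0;9;7;12;10;8;6;4]];
  [:: [::12;7;2;9;6;8;1;5;10;0;11;3;4]; [::8;4;1;7;5;11;2;6;3;12;0;10;9]; [::12;1;10;9;11;7;0;3;5;2;4;6;8]];
  [:: [::10;6;9;4;8;3;11;12;1;2;7;0;5]; [::0;2;9;3;7;1;4;10;11;12;5;8;6]; [::4;2;6;3;10;5;7;0;12;1;11;8;9]];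
  [:: [::5;3;7;2;9;6;10;12;0;8;11;4;1]; [::5;8;11;10;7;0;9;12;1;2;3;4;6]; [::11;0;4;7;12;2;6;3;1;5;10;9;8]];
  [:: [::8;10;6;3;9;4;7;5;11;1;12;0;2]; [::11;9;12;7;3;5;10;4;2;8;6;1;0]; [::3;12;1;5;0;7;11;4;8;2;9;6;10]];
  [:: [::3;8;9;0;4;10;7;11;5;2;6;12;1]; [::7;3;0;10;12;4;11;2;5;6;8;9;1]; [::2;0;6;3;1;8;11;10;9;4;5;7;12]];
  [:: [::9;6;1;10;7;4;11;0;3;5;2;12;8]; [::8;11;12;6;3;5;10;2;4;9;0;7;1]; [::12;0;6;2;5;7;11;9;10;1;3;8;4]];
  [:: [::3;0;10;8;5;11;12;1;9;7;2;6;4]; [::4;11;6;12;7;10;5;2;9;8;3;0;1]; [::4;12;8;9;6;0;7;11;2;1;5;10;3]];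
  [:: [::11;6;9;0;2;8;4;7;10;3;12;5;1]; [::12;11;9;8;5;7;2;6;3;1;0;10;4]; [::12;2;10;6;1;5;3;7;9;0;11;4;8]];
  [:: [::5;1;8;6;2;12;11;4;0;10;3;9;7]; [::9;0;2;10;4;8;5;11;7;1;3;6;12]; [::0;12;5;9;2;7;4;1;11;10;6;8;3]];
  [:: [::11;4;12;5;2;7;1;8;3;9;0;6;10]; [::11;0;4;1;9;5;7;10;2;8;3;12;6]; [::9;8;10;11;5;3;0;7;4;12;1;2;6]];
  [:: [::12;6;10;9;0;7;5;3;1;11;8;2;4]; [::1;4;2;12;10;3;11;8;6;0;5;7;9]; [::0;11;9;7;3;8;12;4;10;1;5;6;2]];
  [:: [::12;8;11;2;4;7;9;0;3;10;6;1;5]; [::0;2;5;3;11;9;1;12;7;8;10;6;4]; [::12;2;8;1;5;7;11;4;10;3;6;9;0]];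
  [:: [::11;7;5;12;3;9;6;1;4;8;10;0;2]; [::11;10;9;8;1;3;7;12;0;4;5;2;6]; [::12;4;8;5;11;9;0;3;6;1;2;10;7]];
  [:: [::3;6;12;4;11;0;5;1;8;2;7;10;9]; [::9;3;10;7;0;4;8;2;11;1;12;5;6]; [::7;9;6;8;5;10;11;3;12;4;1;0;2]];
  [:: [::5;0;4;10;12;3;7;2;11;1;6;8;9]; [::0;6;12;7;1;8;5;3;10;11;9;2;4]; [::5;7;9;1;4;11;3;8;2;6;10;12;0]];
  [:: [::5;11;8;1;7;9;2;4;10;6;0;3;12]; [::9;0;7;11;6;1;3;8;4;2;5;10;12]; [::10;11;4;7;2;12;6;9;8;5;1;0;3]];
  [:: [::4;11;10;1;6;0;5;9;12;2;3;7;8]; [::11;1;3;0;2;8;10;7;12;5;9;4;6]; [::4;0;9;11;3;12;1;8;6;10;7;5;2]];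
  [:: [::1;10;8;5;9;3;6;12;11;7;2;4;0]; [::8;4;10;6;2;9;1;7;11;5;3;12;0]; [::12;9;6;4;0;10;5;3;1;7;8;2;11]];
  [:: [::1;8;5;0;3;10;7;2;12;6;9;4;11]; [::3;5;7;12;11;2;9;1;6;0;4;10;8]; [::11;0;10;8;12;9;5;2;4;7;1;6;3]];
  [:: [::9;4;1;3;11;7;12;8;5;6;10;2;0]; [::11;1;5;7;2;0;10;6;9;3;12;8;4]; [::4;2;8;1;9;0;3;10;12;7;11;6;5]];
  [:: [::0;9;2;4;1;11;7;12;10;6;8;3;5]; [::8;5;1;3;12;9;4;10;2;7;11;0;6]; [::11;5;12;1;9;6;10;8;3;4;2;7;0]];
  [:: [::4;2;5;9;8;6;10;1;12;7;0;3;11]; [::11;12;5;7;10;3;1;4;6;2;8;0;9]; [::2;11;5;0;7;9;3;12;10;1;6;4;8]];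
  [:: [::0;10;8;2;7;9;11;5;12;6;4;3;1]; [::6;2;5;3;1;4;11;8;12;0;9;10;7]; [::7;3;9;8;5;10;4;12;1;0;6;11;2]];
  [:: [::11;4;12;1;3;5;8;2;10;0;9;7;6]; [::12;3;7;10;0;2;6;4;9;11;5;8;1]; [::4;1;11;9;6;0;7;12;10;8;3;2;5]];
  [:: [::11;9;4;1;3;7;12;5;10;2;0;8;6]; [::6;10;0;12;9;3;11;8;1;5;2;4;7]; [::0;6;12;10;8;2;7;5;9;1;3;11;4]];
  [:: [::2;0;3;11;1;10;6;8;12;4;5;7;9]; [::11;8;1;9;6;12;0;5;7;10;2;3;4]; [::3;5;8;10;0;4;7;12;9;1;11;6;2]];
  [:: [::0;5;12;7;4;9;10;8;2;3;11;6;1]; [::12;8;4;0;10;1;11;3;6;5;7;2;9]; [::7;3;12;10;2;11;6;0;9;8;4;5;1]];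
  [:: [::1;7;3;5;0;6;2;12;8;10;11;4;9]; [::6;9;4;10;0;12;3;11;8;7;5;1;2]; [::8;10;1;4;11;0;2;9;5;12;6;7;3]];
  [:: [::4;12;11;8;9;3;0;10;1;6;5;7;2]; [::7;9;2;11;6;12;10;4;0;5;8;3;1]; [::6;3;7;2;0;5;11;4;9;8;1;12;10]];
  [:: [::9;4;10;2;7;12;3;11;1;6;8;0;5]; [::4;6;2;8;10;7;9;0;11;12;1;3;5]; [::5;12;6;1;10;3;0;2;9;4;7;8;11]];
  [:: [::11;3;12;9;4;1;7;2;8;5;0;6;10]; [::2;0;3;10;5;8;9;11;6;7;12;4;1]; [::6;10;2;11;5;0;7;12;8;4;3;1;9]];
  [:: [::4;7;10;9;5;3;1;12;0;8;11;6;2]; [::1;4;6;10;3;12;11;2;9;7;8;5;0]; [::7;2;8;9;11;0;10;12;5;3;6;4;1]];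
  [:: [::1;10;4;9;5;2;0;6;3;8;7;12;11]; [::9;10;5;1;6;11;12;4;0;7;3;8;2]; [::11;9;6;4;2;8;5;12;7;10;0;1;3]];
  [:: [::2;4;7;1;9;11;8;3;6;10;12;5;0]; [::11;1;12;3;5;9;10;0;2;7;8;6;4]; [::6;0;5;11;4;10;3;1;8;12;7;9;2]];
  [:: [::9;12;2;5;10;6;1;11;8;7;3;4;0]; [::9;7;10;11;5;12;0;6;4;2;1;8;3]; [::8;4;10;3;7;0;11;6;2;1;12;9;5]];
  [:: [::2;12;3;5;11;6;9;0;4;1;10;8;7]; [::10;3;7;4;8;9;12;11;0;2;6;5;1]; [::5;1;3;8;11;2;10;6;12;7;9;0;4]];
  [:: [::3;9;12;7;5;1;6;4;0;2;8;10;11]; [::6;0;11;9;7;4;8;5;10;1;3;12;2]; [::6;8;12;0;2;10;3;1;9;7;11;4;5]];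
  [:: [::6;8;12;9;5;7;4;10;11;1;0;3;2]; [::10;0;5;12;11;4;8;2;6;3;1;9;7]; [::9;7;10;1;6;4;12;2;11;3;8;0;5]];
  [:: [::1;3;12;7;0;10;6;11;4;9;2;5;8]; [::11;2;7;1;8;9;10;12;5;4;3;6;0]; [::3;10;5;0;12;11;8;6;9;2;1;4;7]];
  [:: [::5;3;9;7;10;1;12;6;8;2;0;4;11]; [::4;0;12;8;9;10;6;3;11;7;2;1;5]; [::6;2;9;4;7;12;11;5;0;8;1;10;3]];
  [:: [::1;8;6;3;12;9;2;11;10;5;7;4;0]; [::9;10;6;2;12;0;7;3;8;4;11;5;1]; [::9;5;2;10;0;4;7;12;6;3;1;11;8]];
  [:: [::3;9;12;7;11;5;2;10;8;6;0;1;4]; [::6;11;2;0;5;9;7;10;4;12;3;8;1]; [::12;5;3;11;9;0;6;10;1;7;2;4;8]];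
  [:: [::11;3;12;9;5;0;7;4;6;10;2;8;1]; [::10;9;8;6;2;12;5;1;11;4;0;7;3]; [::8;11;4;2;7;10;1;6;3;12;5;0;9]];
  [:: [::9;8;5;12;2;0;4;11;10;7;3;1;6]; [::4;6;3;10;1;5;11;7;2;0;9;12;8]; [::8;6;10;0;9;7;12;3;11;4;5;1;2]];
  [:: [::4;10;5;0;7;1;6;9;8;2;12;3;11]; [::11;9;1;12;2;4;6;8;3;0;7;5;10]; [::9;0;6;3;5;11;1;8;10;4;2;12;7]];
  [:: [::0;5;8;9;10;4;12;1;3;2;6;7;11]; [::2;9;6;12;7;10;3;5;11;1;4;0;8]; [::7;0;9;12;11;10;6;2;4;3;1;8;5]];
  [:: [::4;11;3;0;5;2;8;10;1;9;12;6;7]; [::8;5;1;9;2;4;7;12;11;3;0;6;10]; [::8;1;11;0;2;12;5;9;4;3;7;10;6]];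
  [:: [::0;10;7;1;6;8;11;12;5;3;9;2;4]; [::0;9;3;8;12;10;11;4;2;7;5;6;1]; [::0;3;7;5;2;12;9;6;11;8;1;4;10]];
  [:: [::6;11;2;5;1;9;3;0;12;4;8;7;10]; [::5;10;1;3;7;9;2;8;12;11;0;4;6]; [::2;6;9;8;3;5;0;4;10;7;12;11;1]];
  [:: [::1;6;2;5;11;0;10;9;12;3;4;8;7]; [::9;11;8;5;12;7;3;1;4;0;2;6;10]; [::2;8;3;11;6;10;7;9;0;1;4;5;12]];
  [:: [::6;2;12;9;10;3;0;7;4;1;8;11;5]; [::1;8;5;0;9;6;11;7;3;2;4;12;10]; [::4;1;5;10;8;3;6;0;2;11;9;7;12]];
  [:: [::12;10;8;11;4;6;9;5;2;3;0;1;7]; [::0;7;1;5;3;9;2;8;12;4;11;10;6]; [::7;10;3;6;8;9;4;12;11;5;1;0;2]];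
  [:: [::0;2;5;9;7;1;12;8;4;10;6;11;3]; [::0;3;5;1;8;2;11;4;9;6;12;10;7]; [::7;0;5;11;1;9;10;6;3;8;12;4;2]];
  [:: [::9;7;5;8;12;0;10;4;1;2;11;6;3]; [::11;8;1;7;3;6;10;2;12;0;4;5;9]; [::5;0;9;12;7;4;11;1;3;8;6;10;2]];
  [:: [::2;5;12;11;9;8;1;7;4;3;10;0;6]; [::9;10;0;4;6;8;12;1;5;2;7;11;3]; [::8;5;10;7;9;2;11;0;3;6;1;12;4]];
  [:: [::1;9;2;0;6;4;11;10;12;7;3;5;8]; [::7;0;11;1;5;8;3;10;2;12;4;6;9]; [::9;11;12;0;3;6;8;1;7;2;5;4;10]];
  [:: [::9;0;6;8;2;12;11;10;1;4;3;5;7]; [::4;0;12;6;10;5;7;11;9;1;8;3;2]; [::5;0;11;1;4;7;9;12;3;2;8;6;10]];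
  [:: [::9;0;5;11;7;3;8;1;4;6;12;10;2]; [::4;7;0;12;1;11;6;8;2;9;3;10;5]; [::10;7;1;9;6;2;12;5;8;4;11;3;0]];
  [:: [::11;1;5;7;10;6;12;0;4;2;3;8;9]; [::2;10;11;12;9;0;3;8;4;5;7;6;1]; [::10;5;9;8;6;0;11;7;4;3;1;2;12]];
  [:: [::10;1;8;2;7;12;3;6;9;0;11;4;5]; [::6;2;9;1;11;12;10;7;0;4;5;3;8]; [::10;3;7;4;0;9;8;12;5;11;1;6;2]];
  [:: [::3;9;4;2;7;5;11;12;10;6;1;8;0]; [::9;2;11;7;3;5;10;8;12;4;0;6;1]; [::12;1;6;8;11;10;7;0;5;9;4;3;2]];
  [:: [::0;11;7;5;10;12;6;2;4;9;8;3;1]; [::3;9;10;8;5;1;6;0;12;7;2;4;11]; [::1;9;7;10;11;3;5;2;8;12;0;4;6]];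
  [:: [::10;12;3;6;4;2;11;9;1;0;7;5;8]; [::0;12;8;6;1;7;9;10;3;2;11;5;4]; [::0;6;11;1;12;9;4;8;10;7;5;2;3]];
  [:: [::2;11;12;9;5;1;7;0;10;8;6;4;3]; [::12;2;9;6;10;1;11;7;4;0;3;8;5]; [::11;9;0;2;6;3;12;5;8;4;10;7;1]];
  [:: [::9;1;3;10;6;11;4;12;5;0;7;2;8]; [::9;7;4;8;10;0;3;6;2;12;1;11;5]; [::7;5;10;4;1;12;0;9;11;2;6;3;8]];
  [:: [::0;3;1;4;12;11;8;5;7;6;2;10;9]; [::5;2;6;1;10;0;11;9;12;7;3;4;8]; [::6;10;9;8;12;3;11;2;0;4;1;7;5]];
  [:: [::9;8;4;0;2;11;10;5;7;1;12;3;6]; [::2;12;11;3;0;7;1;10;6;5;8;4;9]; [::0;5;11;4;2;7;12;10;9;8;1;3;6]];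
  [:: [::9;2;4;7;12;8;5;3;10;1;11;6;0]; [::12;10;6;3;0;4;11;8;2;7;9;1;5]; [::5;0;12;3;1;4;10;2;7;8;11;9;6]];
  [:: [::1;10;5;2;0;6;8;11;7;12;4;3;9]; [::11;12;2;6;10;4;8;5;3;7;9;1;0]; [::1;11;2;8;9;3;0;7;5;10;12;4;6]];
  [:: [::8;4;1;3;7;5;9;2;6;11;0;10;12]; [::7;1;11;12;6;3;9;4;10;5;8;0;2]; [::0;4;12;5;8;1;10;11;7;6;3;2;9]];
  [:: [::10;11;3;8;5;0;9;4;2;7;12;1;6]; [::10;7;0;6;12;9;11;5;3;1;4;2;8]; [::3;9;10;12;2;6;8;1;7;11;5;4;0]];
  [:: [::6;11;7;3;12;5;0;2;9;4;8;10;1]; [::10;9;4;2;5;3;1;7;12;11;0;8;6]; [::4;8;1;12;9;11;10;0;6;5;3;2;7]];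
  [:: [::4;10;9;7;3;5;1;6;0;2;8;12;11]; [::0;2;8;9;4;11;1;10;12;5;3;6;7]; [::7;4;1;12;11;9;3;10;2;0;8;5;6]];
  [:: [::2;7;11;10;3;12;4;1;9;8;5;0;6]; [::10;6;0;7;3;9;5;8;2;4;1;12;11]; [::4;0;9;8;10;5;1;12;11;2;7;3;6]];
  [:: [::3;7;4;0;9;11;1;10;8;5;12;2;6]; [::3;6;11;7;2;9;12;8;1;4;10;0;5]; [::4;11;3;12;1;6;0;2;8;10;7;9;5]];
  [:: [::8;9;7;1;4;10;3;6;2;5;11;0;12]; [::11;0;4;6;9;2;5;7;10;3;1;8;12]; [::11;3;5;1;6;0;10;2;4;12;7;8;9]];
  [:: [::2;4;11;0;9;12;1;5;10;8;7;6;3]; [::1;8;3;10;0;12;2;9;7;6;5;4;11]; [::6;3;12;11;7;4;9;8;10;0;2;1;5]];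
  [:: [::10;4;1;9;3;7;11;6;2;8;0;12;5]; [::1;12;6;9;10;0;3;8;5;11;4;2;7]; [::5;0;12;11;8;4;6;3;10;7;9;2;1]];
  [:: [::5;0;6;2;7;10;8;12;1;9;3;11;4]; [::2;4;8;1;3;10;6;9;11;0;5;12;7]; [::8;11;6;12;10;5;2;0;3;7;1;4;9]];
  [:: [::1;11;9;6;3;7;12;4;10;8;5;0;2]; [::7;10;9;4;8;5;3;12;0;11;2;6;1]; [::5;11;0;4;6;10;2;8;12;7;9;1;3]];
  [:: [::9;7;3;5;8;10;1;4;6;0;11;12;2]; [::10;6;8;12;2;7;11;0;9;3;5;1;4]; [::3;10;7;12;1;11;9;5;0;2;8;4;6]];
  [:: [::4;0;3;7;5;12;11;9;6;2;1;8;10]; [::6;11;5;10;9;7;12;4;8;3;2;1;0]; [::1;3;5;0;7;2;8;10;12;6;11;4;9]];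
  [:: [::9;4;0;6;2;5;10;8;3;12;11;7;1]; [::9;0;2;8;11;6;3;5;7;1;12;10;4]; [::9;1;8;12;6;10;3;11;2;7;5;4;0]];
  [:: [::12;8;9;10;11;5;2;0;4;6;1;3;7]; [::0;3;5;10;6;11;8;4;9;7;12;1;2]; [::8;1;6;0;7;11;9;12;10;3;2;4;5]];
  [:: [::3;8;5;10;0;4;7;9;11;6;2;1;12]; [::1;10;2;0;9;6;8;11;7;4;5;3;12]; [::11;6;2;8;4;9;1;5;0;7;3;10;12]];
  [:: [::2;4;6;12;11;10;3;0;9;8;7;5;1]; [::7;9;8;5;0;2;12;3;1;11;4;10;6]; [::8;4;1;5;7;11;6;9;10;12;0;2;3]];
  [:: [::10;0;4;8;2;11;9;1;3;5;6;12;7]; [::6;0;12;9;5;8;10;7;11;1;4;3;2]; [::9;6;1;11;5;10;4;12;2;3;8;0;7]];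
  [:: [::12;6;8;11;9;3;7;0;4;10;5;2;1]; [::2;4;10;9;8;5;12;3;6;7;1;0;11]; [::9;4;1;7;2;11;0;10;12;3;5;8;6]];
  [:: [::9;8;11;12;0;6;1;4;10;7;5;2;3]; [::8;5;7;2;0;9;1;12;3;10;11;6;4]; [::3;11;5;10;2;6;4;7;9;12;0;1;8]];
  [:: [::12;2;5;7;11;6;1;9;8;10;0;3;4]; [::5;12;0;7;3;8;4;11;9;1;10;6;2]; [::0;4;6;2;9;12;11;8;5;10;7;3;1]];
  [:: [::1;4;2;12;6;9;3;11;8;7;10;0;5]; [::11;1;3;12;4;6;2;5;7;10;9;8;0]; [::10;7;9;12;5;8;2;0;11;4;3;1;6]];
  [:: [::7;2;0;10;5;12;11;8;9;3;1;4;6]; [::6;0;5;1;7;4;2;10;3;12;8;9;11]; [::4;12;3;9;1;6;8;5;11;10;7;0;2]];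
  [:: [::2;8;4;10;1;3;7;5;9;12;6;11;0]; [::11;3;10;6;9;1;12;8;5;2;4;7;0]; [::4;9;8;11;10;5;1;7;12;0;3;2;6]];
  [:: [::4;0;11;12;3;9;2;10;8;1;7;6;5]; [::12;6;10;11;2;7;1;5;9;4;0;8;3]; [::6;4;11;7;10;1;12;5;3;0;9;2;8]];
  [:: [::11;4;1;5;10;3;8;2;9;12;6;7;0]; [::10;8;5;3;9;4;2;12;0;6;11;1;7]; [::7;12;5;11;2;0;3;6;9;10;4;1;8]];
  [:: [::4;8;10;3;5;2;9;1;7;11;12;6;0]; [::12;4;11;2;7;0;9;3;6;1;10;5;8]; [::10;5;11;8;3;7;12;2;0;4;1;9;6]];
  [:: [::9;5;7;0;6;8;4;11;3;1;12;10;2]; [::4;12;2;0;3;10;11;8;9;7;6;1;5]; [::5;3;6;4;2;7;10;0;12;8;11;1;9]];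
  [:: [::6;4;11;2;5;0;12;1;10;9;7;8;3]; [::12;11;3;1;7;0;10;5;8;6;4;9;2]; [::7;5;12;2;8;11;10;4;9;6;0;1;3]];
  [:: [::0;7;2;4;1;8;3;6;10;9;5;12;11]; [::11;4;10;9;1;5;0;3;7;2;8;6;12]; [::6;9;5;3;10;12;4;0;2;1;8;7;11]];
  [:: [::2;5;7;12;4;6;1;8;11;0;3;10;9]; [::11;5;9;1;12;6;8;10;4;0;2;3;7]; [::12;0;6;9;3;10;11;7;2;4;1;5;8]];
  [:: [::6;2;5;8;11;1;12;7;9;10;4;0;3]; [::2;8;3;7;0;6;10;12;9;5;11;4;1]; [::11;2;10;5;9;8;1;4;6;0;12;3;7]];
  [:: [::2;6;12;1;4;7;3;5;11;0;9;8;10]; [::7;11;3;1;10;6;4;9;5;0;2;12;8]; [::3;8;1;5;12;2;7;0;10;6;11;9;4]];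
  [:: [::7;0;12;1;6;9;5;10;3;4;8;11;2]; [::10;0;9;12;8;2;7;5;11;6;4;3;1]; [::1;10;8;9;2;5;3;11;7;4;0;6;12]];
  [:: [::11;2;0;9;10;5;12;7;1;4;6;8;3]; [::9;5;3;10;8;6;4;12;2;1;11;7;0]; [::3;0;12;6;11;4;1;9;7;8;10;5;2]];
  [:: [::7;5;10;8;12;11;0;9;1;6;2;4;3]; [::12;9;3;11;10;2;0;4;7;5;8;1;6]; [::3;7;10;4;9;8;6;12;1;11;2;5;0]];
  [:: [::10;9;4;6;1;5;7;11;12;0;3;2;8]; [::6;9;5;8;2;11;1;12;0;7;4;3;10]; [::7;4;1;9;0;10;6;12;2;5;8;11;3]];
  [:: [::8;10;7;12;9;6;1;4;11;2;3;5;0]; [::9;1;10;4;6;0;12;5;8;3;7;11;2]; [::1;8;12;2;10;9;4;7;11;3;5;6;0]];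
  [:: [::1;9;2;8;4;10;3;5;11;0;12;7;6]; [::2;12;9;7;11;8;1;5;0;6;10;3;4]; [::11;10;12;8;3;0;9;6;4;7;2;1;5]];
  [:: [::5;8;1;3;0;11;4;9;7;6;12;10;2]; [::9;3;12;0;10;7;4;2;6;5;1;8;11]; [::10;1;12;2;5;9;0;6;3;7;8;4;11]];
  [:: [::4;10;7;2;11;5;12;3;6;0;8;1;9]; [::4;1;9;6;8;3;5;10;11;7;12;0;2]; [::3;0;9;11;12;8;2;6;1;5;7;4;10]];
  [:: [::6;1;11;3;9;12;2;4;0;8;7;10;5]; [::0;9;10;4;8;1;3;7;12;2;5;6;11]; [::4;7;9;2;11;5;12;8;6;0;1;3;10]];
  [:: [::2;4;9;10;11;5;7;1;12;0;8;3;6]; [::0;6;10;8;9;7;11;1;3;5;4;2;12]; [::12;7;4;6;2;10;1;9;0;3;5;8;11]];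
  [:: [::10;4;1;7;0;11;8;5;12;9;6;3;2]; [::11;2;12;3;0;4;7;9;1;10;5;8;6]; [::2;8;1;12;7;10;3;6;0;5;9;11;4]];
  [:: [::2;9;5;3;8;10;11;1;6;12;4;7;0]; [::11;9;12;5;2;4;1;7;0;3;10;6;8]; [::10;5;7;4;12;0;6;9;3;1;8;2;11]];
  [:: [::5;0;7;1;6;11;2;4;9;12;10;8;3]; [::7;2;0;9;10;12;3;8;4;11;5;1;6]; [::6;9;1;3;11;7;10;0;12;2;8;5;4]];
  [:: [::12;4;1;6;11;0;2;5;8;10;7;3;9]; [::12;9;7;1;11;2;10;3;5;8;6;4;0]; [::3;12;0;7;2;4;11;9;8;5;1;6;10]];
  [:: [::7;12;2;11;4;6;9;1;3;10;0;8;5]; [::6;2;8;9;7;5;0;4;12;10;11;1;3]; [::3;8;12;10;4;9;5;1;11;0;6;7;2]];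
  [:: [::2;12;9;6;8;4;1;7;11;3;0;10;5]; [::12;5;3;1;6;0;2;9;8;11;10;7;4]; [::6;4;11;5;2;7;3;0;10;8;9;12;1]];
  [:: [::9;12;10;0;4;11;5;1;8;6;3;7;2]; [::8;6;2;5;9;1;11;10;4;3;12;7;0]; [::11;9;7;12;1;6;10;5;0;8;2;3;4]];
  [:: [::6;2;11;7;0;12;10;1;3;9;5;8;4]; [::1;8;11;10;2;0;9;6;4;5;12;7;3]; [::11;0;6;1;5;7;9;8;12;4;2;3;10]];
  [:: [::5;0;9;8;2;7;10;11;1;6;4;3;12]; [::3;1;10;12;2;9;11;6;8;4;5;0;7]; [::5;2;10;6;1;12;9;4;11;7;0;8;3]];
  [:: [::4;6;10;1;8;9;11;3;12;0;5;7;2]; [::1;7;2;12;10;9;4;0;5;11;8;6;3]; [::2;5;3;6;12;11;10;7;0;1;9;4;8]];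
  [:: [::7;12;3;11;8;4;6;2;10;5;0;9;1]; [::9;10;4;12;1;6;0;7;2;5;8;3;11]; [::0;3;7;5;11;2;8;1;10;6;12;9;4]];
  [:: [::12;9;4;0;11;6;2;10;8;1;3;7;5]; [::7;3;9;2;8;6;1;5;0;10;11;12;4]; [::9;7;2;0;12;11;1;10;5;8;6;4;3]];
  [:: [::1;3;11;2;5;12;6;0;7;4;9;8;10]; [::0;9;4;12;11;6;8;10;5;3;7;2;1]; [::2;9;10;0;12;3;7;11;8;4;1;6;5]];
  [:: [::9;8;3;11;1;4;7;10;5;12;6;2;0]; [::10;6;0;9;1;8;5;2;4;3;12;7;11]; [::11;4;12;8;6;1;7;9;2;3;5;0;10]];
  [:: [::6;8;5;7;9;1;10;0;12;2;4;3;11]; [::2;7;3;9;12;10;6;1;11;0;4;5;8]; [::12;11;10;2;8;4;6;0;5;3;9;7;1]];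
  [:: [::3;9;5;7;10;12;4;6;1;8;0;2;11]; [::9;0;7;11;8;10;3;6;2;12;4;5;1]; [::4;2;5;8;3;12;1;11;0;10;7;6;9]];
  [:: [::7;5;11;6;0;4;12;3;9;10;8;1;2]; [::3;1;7;2;9;4;10;8;5;12;11;0;6]; [::5;1;11;2;12;7;0;10;9;6;3;8;4]];
  [:: [::3;10;8;2;5;7;11;6;0;1;12;9;4]; [::11;3;5;12;2;4;9;10;1;8;7;0;6]; [::12;3;9;1;5;10;7;4;6;11;2;0;8]];
  [:: [::11;4;9;6;12;8;3;1;7;0;10;5;2]; [::4;7;2;0;6;10;9;3;12;5;11;8;1]; [::12;7;0;10;11;1;6;4;2;3;8;5;9]];
  [:: [::9;5;10;0;2;8;4;6;12;1;11;7;3]; [::1;12;2;10;7;11;6;8;3;0;9;5;4]; [::10;9;0;4;2;6;3;7;1;11;5;8;12]];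
  [:: [::12;6;4;11;10;3;1;9;8;7;5;2;0]; [::7;1;10;2;12;0;6;11;5;4;3;9;8]; [::0;3;9;12;5;1;6;8;10;11;2;7;4]];
  [:: [::11;4;1;12;9;10;2;0;6;5;7;8;3]; [::6;9;11;10;7;0;12;5;3;1;4;8;2]; [::8;4;0;11;5;7;9;3;1;10;2;6;12]];
  [:: [::12;2;4;6;0;3;7;10;9;8;5;11;1]; [::9;11;6;10;3;12;4;1;8;5;2;0;7]; [::3;6;2;7;11;10;4;8;5;12;1;0;9]];
  [:: [::0;4;10;11;6;1;8;12;3;5;2;7;9]; [::3;6;4;12;11;8;5;0;7;2;9;1;10]; [::7;1;9;4;8;10;2;0;11;5;12;3;6]];
  [:: [::10;7;11;4;12;2;5;0;3;8;1;9;6]; [::4;10;11;1;3;5;8;12;9;2;0;7;6]; [::12;1;9;0;4;2;10;8;6;3;5;11;7]];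
  [:: [::9;4;1;6;0;11;10;3;5;12;2;7;8]; [::11;9;10;0;4;8;1;3;12;2;5;7;6]; [::0;3;7;11;6;10;4;2;12;5;1;9;8]];
  [:: [::5;1;4;7;12;2;0;11;10;8;9;6;3]; [::4;2;7;9;10;3;11;12;0;5;6;8;1]; [::11;4;10;12;1;8;3;5;2;0;7;9;6]];
  [:: [::4;12;3;7;0;9;5;2;8;10;11;1;6]; [::4;10;3;0;6;12;1;11;7;8;2;5;9]; [::2;9;1;7;10;8;6;11;0;3;12;5;4]];
  [:: [::3;1;7;2;10;4;9;8;6;5;12;11;0]; [::0;7;9;2;4;6;10;1;12;3;11;5;8]; [::10;7;12;3;0;4;11;1;9;8;6;5;2]];
  [:: [::11;1;8;5;10;0;7;4;12;9;2;6;3]; [::2;11;6;4;0;9;10;8;12;1;3;7;5]; [::9;3;12;6;1;5;2;8;4;10;11;7;0]];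
  [:: [::7;0;12;9;4;8;2;6;1;3;10;11;5]; [::12;10;1;9;5;8;6;0;2;4;11;3;7]; [::3;5;7;12;1;4;10;11;9;0;6;2;8]];
  [:: [::3;6;2;9;1;4;10;8;12;5;11;7;0]; [::9;4;2;0;5;1;6;11;12;3;7;10;8]; [::7;12;6;10;1;8;2;5;11;3;0;9;4]];
  [:: [::10;0;6;12;11;1;3;7;9;2;4;8;5]; [::6;2;0;9;5;10;12;8;4;7;11;1;3]; [::11;3;0;12;7;2;4;1;9;6;5;10;8]];
  [:: [::4;11;7;2;5;10;3;8;9;1;12;6;0]; [::11;3;0;6;4;2;12;9;1;5;7;8;10]; [::0;9;10;11;12;6;1;5;7;4;8;3;2]];
  [:: [::0;2;8;11;4;10;7;1;9;6;12;3;5]; [::9;3;11;2;6;12;1;8;10;7;4;0;5]; [::3;12;2;10;11;6;9;7;5;4;1;8;0]];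
  [:: [::9;3;7;12;4;6;2;5;0;11;10;1;8]; [::2;12;5;9;10;4;8;3;11;0;7;1;6]; [::1;5;3;10;12;0;11;9;7;2;4;6;8]];
  [:: [::5;12;3;10;9;7;0;4;2;11;8;1;6]; [::0;12;10;1;4;8;9;2;11;6;5;3;7]; [::3;9;11;4;10;2;7;12;1;0;5;8;6]];
  [:: [::8;11;2;9;12;4;6;10;5;7;3;1;0]; [::3;7;1;10;8;4;0;9;11;6;5;2;12]; [::9;10;3;12;6;2;7;4;1;11;5;0;8]];
  [:: [::1;9;7;5;0;2;6;3;10;12;4;8;11]; [::1;7;12;9;5;10;4;11;8;3;0;6;2]; [::4;1;6;8;9;3;11;2;12;10;0;7;5]];
  [:: [::0;7;3;12;2;4;10;8;9;5;11;1;6]; [::4;11;0;5;1;6;9;12;8;7;3;2;10]; [::9;1;7;4;12;6;3;5;10;2;11;0;8]];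
  [:: [::12;11;8;3;0;10;9;7;2;5;6;1;4]; [::8;2;5;9;4;10;3;12;1;0;11;7;6]; [::1;7;5;12;9;6;0;11;4;10;3;2;8]];
  [:: [::0;12;8;3;6;9;1;10;7;2;5;4;11]; [::9;4;8;10;2;5;12;7;11;1;0;3;6]; [::3;12;9;10;4;11;6;2;0;8;5;1;7]];
  [:: [::9;11;5;7;1;8;4;6;0;3;12;10;2]; [::5;8;3;9;10;4;11;0;12;1;2;6;7]; [::1;12;9;4;7;2;11;3;6;5;0;10;8]];
  [:: [::10;0;5;12;8;11;7;1;4;6;9;3;2]; [::10;5;1;8;4;0;2;9;11;3;12;6;7]; [::9;6;2;4;11;12;7;3;8;1;5;10;0]];
  [:: [::11;3;12;6;1;8;10;0;9;7;2;5;4]; [::4;6;9;2;5;11;1;12;0;3;10;8;7]; [::4;9;3;1;10;12;11;0;2;5;7;6;8]];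
  [:: [::1;12;7;5;9;0;11;3;8;2;4;10;6]; [::3;7;0;10;2;4;8;9;1;12;5;6;11]; [::7;2;0;4;10;9;12;11;1;6;8;5;3]];
  [:: [::10;9;7;3;5;2;8;1;6;4;0;11;12]; [::7;11;12;8;9;3;10;0;4;2;6;5;1]; [::11;2;4;1;5;0;3;12;10;8;6;7;9]];
  [:: [::8;1;10;6;4;0;5;11;3;12;7;9;2]; [::2;5;1;4;11;9;12;3;10;8;6;7;0]; [::6;2;4;8;10;7;1;9;3;11;5;12;0]];
  [:: [::10;5;7;9;0;3;12;11;8;1;4;6;2]; [::12;6;0;2;10;7;11;4;9;8;1;5;3]; [::9;2;11;1;6;10;3;8;5;7;0;4;12]];
  [:: [::1;6;3;12;2;5;10;0;7;11;8;4;9]; [::6;9;12;1;11;10;8;4;0;7;5;3;2]; [::7;12;11;2;4;10;9;8;5;1;6;0;3]];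
  [:: [::1;4;9;0;7;3;12;8;10;6;2;5;11]; [::9;10;0;11;5;1;8;6;12;7;4;2;3]; [::6;1;7;4;12;10;11;9;2;0;8;5;3]];
  [:: [::4;0;2;5;10;8;12;9;6;1;11;7;3]; [::10;12;5;0;11;8;3;1;4;2;6;7;9]; [::10;11;3;5;1;12;2;9;0;6;7;8;4]];
  [:: [::4;7;2;12;5;0;6;1;9;10;8;11;3]; [::9;0;4;10;6;2;11;7;5;12;3;1;8]; [::6;3;7;9;10;12;1;4;11;5;8;2;0]];
  [:: [::12;11;6;10;4;7;1;5;9;0;8;2;3]; [::3;12;5;7;0;10;11;8;6;1;2;4;9]; [::9;10;5;11;7;3;0;4;2;8;1;12;6]];
  [:: [::6;12;0;7;1;10;4;2;8;9;11;5;3]; [::4;8;5;1;3;9;12;10;6;2;0;7;11]; [::1;9;8;3;5;2;0;11;4;6;12;7;10]];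
  [:: [::3;6;10;8;2;11;4;0;7;1;5;12;9]; [::5;11;0;9;1;4;10;12;7;6;2;8;3]; [::4;7;9;2;5;3;1;11;8;6;12;0;10]];
  [:: [::10;3;11;12;1;4;0;7;5;6;8;2;9]; [::10;12;6;11;9;8;1;3;7;4;5;0;2]; [::0;6;4;11;5;1;10;8;3;12;7;2;9]];
  [:: [::4;2;8;9;7;5;10;6;11;0;12;3;1]; [::3;5;12;1;7;0;6;4;9;2;11;10;8]; [::11;0;4;1;3;7;2;9;5;12;8;10;6]];
  [:: [::4;9;10;3;1;12;0;5;7;6;2;8;11]; [::12;3;11;0;4;8;9;1;5;7;6;2;10]; [::5;2;9;12;4;1;7;3;8;11;10;6;0]];
  [:: [::0;4;12;9;5;10;2;11;7;1;8;6;3]; [::5;0;9;7;10;1;12;6;8;4;3;11;2]; [::2;12;0;10;8;3;9;11;4;1;5;7;6]];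
  [:: [::12;9;8;1;4;11;6;10;3;2;0;7;5]; [::8;2;0;9;10;4;7;12;11;5;6;1;3]; [::4;12;1;10;11;2;5;7;0;3;9;8;6]];
  [:: [::11;12;8;2;6;3;7;0;4;9;1;5;10]; [::9;10;3;8;11;6;12;2;7;5;0;4;1]; [::5;10;0;3;9;12;4;1;8;11;6;7;2]];
  [:: [::10;0;4;8;9;11;7;5;2;1;12;3;6]; [::12;10;9;6;11;0;3;1;5;7;8;4;2]; [::8;6;3;9;4;2;11;12;1;5;7;0;10]];
  [:: [::8;9;7;1;5;12;4;6;10;0;11;3;2]; [::11;9;3;10;2;0;5;7;4;8;12;1;6]; [::11;2;4;1;9;0;12;3;6;10;5;8;7]];
  [:: [::12;3;10;2;4;7;9;5;11;6;0;8;1]; [::8;10;9;0;6;2;7;5;1;4;11;3;12]; [::0;12;5;8;11;9;4;6;10;7;1;3;2]];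
  [:: [::0;5;11;6;8;2;9;1;7;10;3;4;12]; [::8;9;4;7;5;10;6;1;11;3;12;2;0]; [::6;0;12;11;9;3;8;10;4;7;2;5;1]];
  [:: [::10;6;3;5;2;4;9;0;11;1;8;7;12]; [::12;2;6;4;1;7;10;0;3;8;9;11;5]; [::9;7;2;8;4;12;11;6;1;5;0;10;3]];
  [:: [::4;7;0;10;3;1;6;11;12;2;5;8;9]; [::9;8;10;4;1;11;0;6;12;3;5;7;2]; [::7;12;3;9;6;8;4;2;11;10;5;1;0]];
  [:: [::10;5;11;4;0;7;3;12;9;2;6;1;8]; [::6;12;5;1;11;8;2;9;3;7;10;4;0]; [::9;4;7;1;8;10;12;0;6;5;3;11;2]];
  [:: [::12;5;0;3;11;4;8;1;7;2;9;6;10]; [::5;2;8;6;10;1;12;4;7;11;0;3;9]; [::9;5;1;11;6;3;8;12;10;4;2;7;0]];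
  [:: [::10;3;0;2;6;9;11;8;5;4;7;1;12]; [::1;7;11;0;10;6;3;9;5;12;2;8;4]; [::8;9;1;4;11;10;7;0;12;6;3;5;2]];
  [:: [::5;2;8;9;6;0;11;10;3;4;7;12;1]; [::3;8;12;5;11;2;10;4;9;1;6;7;0]; [::5;1;4;6;11;9;0;7;10;2;8;3;12]];
  [:: [::1;7;10;12;2;0;9;5;11;4;8;6;3]; [::1;6;3;8;9;12;0;11;10;7;5;4;2]; [::12;4;10;3;1;9;2;8;11;5;0;7;6]];
  [:: [::9;2;7;4;10;5;12;6;1;3;8;0;11]; [::5;8;2;12;7;11;4;6;9;3;0;1;10]; [::6;10;11;9;3;12;4;2;0;1;7;8;5]];
  [:: [::5;2;10;7;4;0;3;12;1;11;6;9;8]; [::8;3;11;5;0;12;9;1;10;7;2;6;4]; [::2;4;12;6;1;7;9;11;8;5;3;10;0]];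
  [:: [::5;3;11;2;10;6;1;9;0;12;7;4;8]; [::5;2;9;11;10;12;3;0;7;1;6;8;4]; [::6;3;7;1;5;9;12;11;8;2;4;10;0]];
  [:: [::1;5;8;2;10;3;6;9;4;7;11;12;0]; [::12;3;5;2;4;10;8;6;0;9;1;11;7]; [::11;10;5;9;2;6;4;12;8;3;7;1;0]];
  [:: [::6;10;5;12;7;4;9;3;1;2;11;8;0]; [::9;7;5;0;2;12;10;3;11;8;1;6;4]; [::12;1;5;11;10;4;6;2;8;3;7;9;0]];
  [:: [::12;4;8;1;5;9;6;10;2;0;7;11;3]; [::1;12;8;11;5;3;10;4;7;2;6;0;9]; [::5;7;9;3;1;4;2;11;12;6;10;0;8]];
  [:: [::9;11;3;1;12;8;6;4;2;10;5;0;7]; [::7;4;1;9;10;12;11;0;3;2;5;8;6]; [::5;3;9;8;1;6;12;7;11;0;10;4;2]];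
  [:: [::0;10;3;6;8;4;1;11;9;7;5;2;12]; [::7;0;6;9;5;10;11;8;2;12;1;3;4]; [::8;10;4;7;5;12;11;3;9;6;0;1;2]];
  [:: [::7;2;8;10;12;6;3;11;5;4;0;9;1]; [::1;3;0;11;10;2;9;12;5;4;7;8;6]; [::0;7;10;9;6;8;4;1;12;11;3;2;5]];
  [:: [::10;0;12;11;5;9;7;4;2;8;3;6;1]; [::3;10;6;12;7;5;2;11;8;1;0;9;4]; [::9;4;12;3;6;0;11;10;1;5;2;7;8]];
  [:: [::12;4;6;11;8;1;7;0;9;5;2;10;3]; [::6;2;12;0;5;10;4;8;9;7;1;3;11]; [::1;12;7;5;8;2;11;3;10;4;9;6;0]];
  [:: [::2;11;7;5;12;6;8;9;0;1;3;4;10]; [::0;10;12;11;1;4;6;9;3;7;8;5;2]; [::5;2;12;0;6;10;7;4;9;3;11;1;8]];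
  [:: [::6;2;11;8;1;3;9;7;10;4;12;5;0]; [::5;10;12;11;0;7;4;2;8;1;6;3;9]; [::9;12;7;1;10;4;8;3;11;5;2;0;6]];
  [:: [::6;12;1;3;8;9;5;0;2;7;11;4;10]; [::11;7;4;9;10;0;6;8;5;1;12;3;2]; [::11;2;7;0;12;5;1;6;10;3;9;4;8]];
  [:: [::2;12;7;5;3;8;10;4;0;11;1;6;9]; [::12;1;8;5;9;11;3;6;0;10;7;2;4]; [::12;9;1;4;7;10;2;8;11;6;5;0;3]];
  [:: [::9;4;6;11;1;8;2;12;10;3;5;0;7]; [::4;0;2;9;11;5;1;7;12;3;10;8;6]; [::10;3;0;12;5;8;9;7;2;4;1;6;11]];
  [:: [::5;9;4;2;6;8;12;11;10;7;0;3;1]; [::8;3;6;10;7;4;0;2;11;1;9;5;12]; [::9;12;10;2;7;1;11;5;3;6;8;4;0]];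
  [:: [::5;9;0;7;2;10;6;4;1;11;3;12;8]; [::10;8;6;12;3;9;2;4;7;5;1;0;11]; [::5;12;4;0;2;11;1;10;3;8;7;6;9]];
  [:: [::10;3;12;8;4;6;2;9;11;0;7;5;1]; [::11;4;7;10;5;2;12;6;8;0;3;1;9]; [::3;0;11;2;7;12;9;1;8;4;6;10;5]];
  [:: [::7;10;0;11;5;3;9;12;4;1;8;2;6]; [::9;1;10;11;12;6;8;4;0;3;2;5;7]; [::10;6;0;2;7;1;11;3;8;5;9;12;4]];
  [:: [::12;10;11;5;0;3;7;9;8;1;4;6;2]; [::12;11;8;10;1;4;2;9;6;7;3;0;5]; [::3;6;4;7;2;0;12;9;5;1;10;8;11]];
  [:: [::12;1;11;0;9;8;5;10;3;6;4;2;7]; [::11;3;6;0;7;5;12;4;10;2;8;1;9]; [::10;7;4;8;11;12;9;3;1;2;0;5;6]];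
  [:: [::1;6;8;3;7;9;0;12;11;10;5;2;4]; [::5;9;4;7;2;12;10;11;0;1;8;6;3]; [::4;10;5;1;9;12;3;6;2;0;11;7;8]];
  [:: [::4;9;0;2;10;5;11;1;12;8;6;3;7]; [::4;11;12;9;6;3;7;1;10;2;5;0;8]; [::8;10;7;5;9;11;0;6;1;12;3;4;2]];
  [:: [::7;0;9;6;2;12;5;10;11;4;8;3;1]; [::1;7;3;9;5;11;0;10;8;12;2;6;4]; [::8;9;11;2;4;1;12;3;6;5;0;7;10]];
  [:: [::3;6;1;12;10;2;11;4;8;0;7;5;9]; [::11;7;3;12;9;6;10;4;1;2;0;5;8]; [::2;7;5;0;3;10;11;12;4;1;6;9;8]];
  [:: [::0;6;1;9;12;4;10;3;7;5;8;11;2]; [::8;11;5;12;6;3;9;4;2;7;1;10;0]; [::8;5;0;4;6;10;2;11;12;3;1;7;9]];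
  [:: [::6;9;5;1;10;8;4;11;2;0;7;12;3]; [::12;8;9;7;3;10;0;2;5;11;4;6;1]; [::11;10;2;7;4;12;1;3;9;6;0;5;8]];
  [:: [::2;0;5;10;11;6;1;3;12;7;9;8;4]; [::0;6;9;10;1;5;3;8;12;4;11;7;2]; [::3;6;8;10;4;11;0;9;7;2;5;1;12]];
  [:: [::8;2;7;3;9;5;11;4;12;6;10;1;0]; [::1;10;12;7;0;9;8;3;11;5;2;6;4]; [::6;0;4;1;9;2;10;7;11;3;12;8;5]];
  [:: [::9;4;1;5;2;6;8;12;0;10;7;3;11]; [::3;0;6;4;7;11;5;10;9;1;2;8;12]; [::0;7;10;3;12;2;9;11;4;1;5;8;6]];
  [:: [::7;11;0;10;12;5;9;3;1;2;4;8;6]; [::3;11;8;6;9;10;2;4;0;7;12;5;1]; [::8;10;7;0;12;4;11;6;3;9;5;1;2]];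
  [:: [::11;12;10;3;6;0;9;1;5;2;7;4;8]; [::5;9;11;10;0;2;6;4;12;8;1;7;3]; [::12;3;9;7;0;11;1;10;6;8;2;4;5]];
  [:: [::3;0;10;9;12;11;7;2;8;1;6;5;4]; [::6;0;2;9;7;12;5;11;10;4;1;8;3]; [::0;5;10;12;2;6;3;11;4;1;8;7;9]];
  [:: [::8;1;4;6;3;10;9;12;11;2;7;5;0]; [::7;3;11;1;12;0;9;8;2;6;10;5;4]; [::5;1;9;6;10;12;2;11;0;8;7;4;3]];
  [:: [::6;4;9;5;1;3;11;0;2;7;10;8;12]; [::5;0;9;6;3;7;4;1;10;12;11;2;8]; [::6;0;10;7;11;1;8;5;12;2;3;9;4]];
  [:: [::8;3;7;0;10;5;11;4;9;2;12;1;6]; [::9;6;4;12;2;5;1;10;7;3;8;0;11]; [::2;8;12;11;7;5;3;10;6;1;0;4;9]];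
  [:: [::11;5;10;2;0;3;7;1;9;6;4;12;8]; [::2;11;1;3;6;12;0;9;7;10;4;5;8]; [::6;0;7;5;8;4;12;10;11;3;2;1;9]];
  [:: [::6;0;7;12;8;1;4;11;10;9;3;2;5]; [::8;10;2;0;5;11;9;12;4;7;1;6;3]; [::4;6;12;2;5;7;11;3;10;1;9;0;8]];
  [:: [::6;9;10;3;8;4;0;11;1;7;5;12;2]; [::9;11;6;12;7;2;8;10;1;5;3;4;0]; [::3;5;1;7;0;12;4;2;11;9;6;10;8]];
  [:: [::1;6;8;12;7;2;0;11;4;10;3;9;5]; [::5;2;9;12;3;8;1;7;0;10;6;4;11]; [::2;10;12;4;6;0;9;5;11;3;8;1;7]];
  [:: [::1;11;6;10;0;9;7;5;3;12;4;2;8]; [::5;10;9;11;4;0;12;6;8;2;1;3;7]; [::11;8;1;5;2;6;0;3;10;12;9;7;4]];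
  [:: [::2;11;8;6;9;3;10;1;12;0;5;4;7]; [::7;0;9;12;8;5;11;6;4;10;1;3;2]; [::12;0;4;11;9;2;7;5;3;6;8;10;1]];
  [:: [::9;5;12;3;8;10;7;0;11;4;6;2;1]; [::11;3;7;5;0;9;1;10;6;4;8;2;12]; [::4;2;8;6;12;11;1;3;10;0;9;5;7]];
  [:: [::10;5;7;3;1;12;9;4;2;6;8;0;11]; [::12;3;5;8;9;10;4;0;2;11;1;6;7]; [::12;8;11;5;2;6;1;7;10;0;3;9;4]];
  [:: [::9;5;3;8;12;4;10;6;1;2;0;11;7]; [::7;10;3;11;0;12;9;6;2;4;5;8;1]; [::7;1;5;2;8;11;9;10;0;6;4;3;12]];
  [:: [::1;5;9;7;3;0;4;6;12;8;2;10;11]; [::9;4;12;8;5;0;10;3;1;7;2;6;11]; [::12;7;10;4;8;9;3;11;0;5;1;6;2]];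
  [:: [::1;4;12;0;5;8;6;3;7;11;10;2;9]; [::1;10;11;8;9;6;2;0;3;5;12;4;7]; [::5;12;10;2;11;6;1;9;7;8;4;3;0]];
  [:: [::11;5;0;2;7;10;4;8;1;12;6;3;9]; [::8;5;1;6;4;7;12;10;11;3;9;0;2]; [::10;9;12;4;1;3;0;11;6;2;7;5;8]];
  [:: [::9;7;11;8;3;6;12;0;2;5;4;10;1]; [::4;7;5;12;10;8;9;6;1;2;3;0;11]; [::4;0;11;9;1;10;7;2;8;12;3;5;6]];
  [:: [::9;1;12;6;11;2;10;4;8;7;3;5;0]; [::1;8;5;2;7;0;3;10;6;12;11;4;9]; [::4;1;10;11;3;8;2;12;0;9;6;7;5]];
  [:: [::3;9;4;0;5;10;1;6;8;11;12;7;2]; [::2;8;1;3;10;12;4;7;0;11;9;6;5]; [::5;12;1;4;2;6;10;0;11;7;9;8;3]];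
  [:: [::5;11;4;0;2;10;1;3;8;9;6;7;12]; [::3;11;10;4;6;8;9;12;0;5;2;1;7]; [::5;12;8;10;3;7;2;9;0;11;1;6;4]];
  [:: [::6;12;9;3;10;11;0;7;2;1;4;5;8]; [::8;9;5;3;11;7;10;2;4;12;0;6;1]; [::12;1;5;0;9;7;3;6;11;10;8;2;4]];
  [:: [::4;9;7;12;11;0;10;6;1;8;2;3;5]; [::4;12;9;11;8;3;0;5;10;7;2;1;6]; [::0;12;2;6;3;5;11;10;7;9;1;4;8]];
  [:: [::9;2;11;5;1;6;8;4;7;12;10;0;3]; [::9;1;12;8;3;7;0;4;10;11;5;6;2]; [::7;10;5;8;9;3;0;6;12;1;2;11;4]];
  [:: [::9;5;2;12;4;7;3;8;10;6;1;0;11]; [::3;0;11;8;2;10;4;9;12;1;6;7;5]; [::11;3;5;7;2;4;8;9;6;0;1;10;12]];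
  [:: [::3;0;9;7;2;12;8;11;10;5;1;6;4]; [::10;5;9;3;6;11;4;8;1;2;0;7;12]; [::9;2;4;0;5;1;12;10;6;8;7;11;3]];
  [:: [::0;3;10;11;6;12;9;2;7;5;1;4;8]; [::12;2;10;0;9;4;7;3;8;6;1;11;5]; [::2;11;9;1;7;10;12;3;5;8;4;6;0]];
  [:: [::7;11;2;9;0;6;8;3;10;12;1;5;4]; [::10;4;6;1;7;9;5;8;12;0;3;11;2]; [::11;5;0;3;12;6;9;10;1;7;8;4;2]];
  [:: [::10;11;8;1;9;2;4;0;5;12;3;7;6]; [::11;5;3;10;7;4;12;1;6;9;8;2;0]; [::9;10;1;3;7;12;8;2;0;5;4;11;6]];
  [:: [::8;9;2;12;4;0;10;7;11;3;1;5;6]; [::0;5;9;1;8;12;11;10;3;2;6;4;7]; [::1;6;10;5;3;8;4;2;11;0;7;9;12]];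
  [:: [::2;6;4;7;1;10;3;0;12;5;8;9;11]; [::12;5;10;4;0;9;1;3;6;11;8;2;7]; [::8;11;0;5;2;7;12;9;10;4;1;6;3]];
  [:: [::12;5;10;1;9;0;11;7;4;2;3;8;6]; [::6;4;0;7;1;8;2;5;9;10;3;11;12]; [::4;9;8;12;0;10;7;3;1;5;6;11;2]];
  [:: [::12;4;10;6;8;11;5;0;3;2;7;9;1]; [::4;2;10;12;9;8;5;7;11;1;0;6;3]; [::9;7;12;2;8;10;3;5;1;0;11;6;4]];
  [:: [::12;9;10;4;6;3;8;2;11;5;7;0;1]; [::0;6;11;5;8;9;7;10;3;1;4;2;12]; [::2;12;3;9;0;7;5;1;6;11;8;4;10]];
  [:: [::9;12;1;5;10;0;3;8;6;11;4;7;2]; [::9;11;0;4;6;1;7;12;5;8;10;3;2]; [::5;7;2;11;1;3;6;10;8;4;0;12;9]];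
  [:: [::7;11;8;6;9;2;12;10;1;3;4;5;0]; [::11;10;2;8;9;3;6;0;12;7;1;4;5]; [::12;6;2;5;7;3;10;4;1;11;9;0;8]];
  [:: [::11;6;10;1;12;4;0;5;3;7;2;9;8]; [::1;11;5;9;12;8;2;10;3;4;7;0;6]; [::1;4;9;2;6;3;12;10;7;0;5;11;8]]].

Definition witnesses_13_10 : seq (seq (seq nat)) := [::
  [:: [::6;12;1;4;11;7;2;10;5;0;9;8;3]; [::1;6;9;4;2;12;0;10;8;5;7;3;11]; [::0;11;8;12;3;7;9;1;10;4;5;2;6]];
  [:: [::7;4;10;5;0;12;3;8;1;11;2;9;6]; [::9;7;5;11;2;0;6;12;10;3;1;8;4]; [::1;10;2;12;8;0;11;9;4;6;5;7;3]];
  [:: [::12;10;1;8;6;9;4;7;11;2;3;5;0]; [::12;0;11;10;9;1;7;5;3;8;6;4;2]; [::6;2;5;12;11;4;10;7;0;3;1;8;9]];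
  [:: [::5;9;2;8;10;1;11;3;6;0;12;4;7]; [::4;9;6;8;3;1;7;5;12;11;0;2;10]; [::2;5;11;6;12;0;8;1;4;10;3;7;9]];
  [:: [::12;5;7;2;11;4;1;8;10;9;6;3;0]; [::0;7;11;6;1;3;10;5;2;12;8;4;9]; [::8;12;4;0;6;10;2;9;11;3;5;1;7]];
  [:: [::7;3;11;12;8;2;4;1;6;0;10;9;5]; [::6;4;12;9;3;5;7;1;11;8;10;2;0]; [::0;12;2;7;11;6;9;5;8;4;10;3;1]];
  [:: [::5;8;1;10;3;0;6;4;7;9;2;12;11]; [::0;5;12;10;8;6;1;9;3;11;4;2;7]; [::3;6;9;11;12;7;5;10;4;8;0;2;1]];
  [:: [::5;10;2;4;12;8;1;9;7;0;3;6;11]; [::7;10;4;9;3;8;2;5;1;12;6;11;0]; [::8;6;3;1;4;7;2;9;5;11;12;0;10]];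
  [:: [::11;5;12;8;0;7;10;1;9;2;4;3;6]; [::4;0;11;9;7;1;6;3;10;8;2;5;12]; [::11;1;5;2;0;6;9;4;7;12;3;10;8]];
  [:: [::12;0;3;7;11;10;4;1;6;8;9;2;5]; [::8;5;11;0;6;9;7;10;12;3;4;1;2]; [::3;11;2;4;0;10;9;1;7;5;6;12;8]];
  [:: [::3;12;2;8;5;11;7;1;10;0;6;9;4]; [::9;4;1;8;3;6;10;11;12;5;2;7;0]; [::4;11;9;1;12;10;2;7;0;6;3;8;5]];
  [:: [::1;3;7;10;8;0;12;5;9;4;6;11;2]; [::11;1;9;10;5;7;4;8;3;0;2;6;12]; [::10;4;6;1;5;8;2;9;3;12;0;7;11]];
  [:: [::2;5;11;10;1;8;4;7;0;12;6;9;3]; [::11;0;2;9;3;7;12;10;5;1;4;6;8]; [::12;5;0;4;10;9;6;8;11;3;1;2;7]];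
  [:: [::7;4;12;9;2;5;0;8;3;11;1;10;6]; [::11;1;9;6;4;0;7;3;12;10;5;8;2]; [::9;10;3;1;6;12;11;8;2;7;5;0;4]];
  [:: [::0;7;2;5;10;4;6;12;3;11;9;1;8]; [::8;5;7;3;6;2;4;9;1;11;12;0;10]; [::12;4;1;5;11;2;0;6;10;9;7;3;8]];
  [:: [::4;11;7;9;3;8;2;6;12;0;1;5;10]; [::1;4;10;8;5;12;9;2;7;3;0;6;11]; [::10;9;5;3;11;1;7;12;8;6;0;4;2]];
  [:: [::0;3;9;1;8;10;11;4;6;12;5;7;2]; [::10;0;5;8;6;11;7;4;2;9;3;1;12]; [::11;5;2;0;6;3;7;10;4;1;8;9;12]];
  [:: [::10;2;12;3;1;5;7;4;8;0;6;11;9]; [::8;2;7;1;12;9;10;5;3;11;0;4;6]; [::9;1;6;8;3;10;12;11;2;4;5;0;7]];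
  [:: [::9;1;8;10;2;4;7;11;0;5;6;3;12]; [::1;12;6;8;5;7;10;3;0;4;2;9;11]; [::10;0;8;3;11;5;12;4;9;6;2;7;1]];
  [:: [::5;7;0;11;8;4;10;2;9;12;6;3;1]; [::6;4;1;9;3;7;10;11;2;0;5;8;12]; [::6;8;3;5;11;7;4;0;12;1;10;2;9]];
  [:: [::2;6;4;10;11;12;3;8;5;9;0;1;7]; [::10;7;9;6;3;11;8;1;5;0;2;4;12]; [::2;4;11;7;12;1;3;10;8;0;9;6;5]];
  [:: [::8;6;4;12;3;1;11;10;0;2;5;7;9]; [::0;6;10;3;8;12;11;5;9;4;1;7;2]; [::0;3;6;11;8;4;1;7;2;12;10;9;5]];
  [:: [::2;12;8;0;5;10;1;9;3;6;7;4;11]; [::0;10;6;11;8;2;7;4;9;12;1;3;5]; [::9;11;12;1;7;3;8;10;4;6;2;0;5]];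
  [:: [::3;9;5;11;2;8;4;10;6;0;1;7;12]; [::3;12;0;5;2;4;9;1;11;6;7;8;10]; [::3;11;8;0;4;1;7;2;9;10;6;5;12]];
  [:: [::2;4;0;3;1;5;10;11;12;7;8;6;9]; [::3;8;6;0;2;12;10;7;4;11;1;5;9]; [::11;5;9;10;3;6;12;1;4;8;0;7;2]];
  [:: [::3;11;4;1;12;2;0;7;5;8;10;6;9]; [::7;1;5;0;3;6;9;11;2;10;4;8;12]; [::10;12;11;6;0;4;9;7;3;1;5;2;8]];
  [:: [::4;12;3;9;6;10;0;11;2;7;8;1;5]; [::10;2;0;7;5;1;8;12;9;4;11;6;3]; [::8;6;2;12;1;10;3;0;5;11;9;4;7]];
  [:: [::10;3;1;12;0;6;4;2;9;11;8;7;5]; [::3;12;5;11;8;1;4;0;7;9;6;10;2]; [::5;3;6;1;11;4;12;7;10;0;2;9;8]];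
  [:: [::8;12;3;9;4;2;7;0;11;5;6;10;1]; [::8;4;10;6;0;2;5;12;11;1;3;9;7]; [::0;8;6;4;11;2;9;10;1;3;12;7;5]];
  [:: [::6;1;11;9;3;8;2;12;5;10;0;4;7]; [::3;10;2;4;12;1;7;0;8;11;5;6;9]; [::9;10;7;11;4;8;5;3;0;12;1;6;2]];
  [:: [::9;3;12;2;10;5;11;1;8;4;0;6;7]; [::5;8;3;6;0;11;9;2;7;12;1;4;10]; [::1;6;4;2;11;12;0;10;7;5;9;3;8]];
  [:: [::9;6;2;0;3;10;8;11;1;7;12;5;4]; [::8;4;11;7;10;9;3;6;12;1;0;5;2]; [::5;10;11;6;1;4;0;12;7;2;3;8;9]];
  [:: [::5;1;6;9;10;2;8;11;12;7;0;3;4]; [::1;7;3;11;6;12;10;8;0;4;9;5;2]; [::4;8;12;3;1;11;9;2;6;10;7;0;5]];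
  [:: [::10;11;9;1;4;6;0;12;2;8;5;3;7]; [::10;5;8;11;7;3;9;6;2;0;4;12;1]; [::2;5;7;12;8;1;10;4;0;11;9;3;6]];
  [:: [::9;7;3;1;5;12;0;8;11;4;2;6;10]; [::8;1;12;3;6;10;11;2;0;5;7;9;4]; [::2;5;3;10;4;7;0;11;12;6;9;8;1]];
  [:: [::7;12;5;8;11;6;4;1;10;9;2;3;0]; [::3;0;5;9;11;12;10;6;2;7;4;1;8]; [::5;2;9;12;8;0;11;7;1;3;6;4;10]];
  [:: [::11;0;5;12;6;9;7;4;8;3;2;1;10]; [::7;5;10;4;1;8;0;2;12;11;3;6;9]; [::10;11;1;5;8;12;0;6;2;9;7;4;3]];
  [:: [::3;11;5;2;4;6;9;1;12;7;10;8;0]; [::8;0;6;11;12;9;7;4;10;2;3;5;1]; [::4;12;3;10;6;8;5;1;7;0;11;2;9]];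
  [:: [::6;3;11;4;8;12;2;5;9;10;1;0;7]; [::3;0;7;9;12;5;8;11;2;10;1;6;4]; [::9;3;12;7;4;6;11;0;10;1;2;5;8]];
  [:: [::1;6;11;0;10;12;2;7;5;8;3;9;4]; [::2;11;3;1;5;10;9;4;8;6;12;7;0]; [::10;6;12;3;7;0;8;11;4;2;9;5;1]];
  [:: [::0;7;10;6;11;8;5;9;12;3;1;2;4]; [::10;11;2;6;4;8;0;12;1;5;7;3;9]; [::1;9;4;11;7;12;10;3;6;8;2;5;0]];
  [:: [::11;1;4;0;7;12;10;8;3;6;9;5;2]; [::9;1;8;12;3;10;11;2;6;4;7;5;0]; [::6;8;11;12;0;2;7;5;3;1;10;9;4]];
  [:: [::9;4;7;5;2;12;11;0;10;3;6;1;8]; [::1;12;3;7;0;5;9;2;8;4;6;10;11]; [::4;0;12;9;10;7;1;5;3;11;6;8;2]];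
  [:: [::11;9;2;10;4;12;0;5;8;1;3;6;7]; [::12;11;7;4;0;6;1;3;9;10;2;8;5]; [::3;8;12;6;9;7;5;1;10;0;2;4;11]];
  [:: [::2;6;8;11;0;3;12;7;1;4;5;10;9]; [::6;12;8;4;7;0;5;9;3;11;10;2;1]; [::5;12;1;3;7;9;2;0;6;10;8;11;4]];
  [:: [::10;6;9;12;3;11;7;1;8;5;2;4;0]; [::7;5;11;0;3;1;6;4;10;9;2;12;8]; [::4;11;6;2;10;1;9;5;0;7;8;12;3]];
  [:: [::7;0;11;5;10;1;3;9;2;4;6;8;12]; [::3;12;5;1;7;10;8;0;4;11;2;6;9]; [::1;11;7;5;2;6;8;3;10;9;0;4;12]];
  [:: [::10;3;11;12;4;7;2;9;1;6;8;0;5]; [::5;2;12;9;7;10;1;11;4;8;3;6;0]; [::3;1;8;12;10;4;9;11;7;0;6;2;5]];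
  [:: [::1;4;8;6;0;11;12;5;9;7;3;10;2]; [::7;5;11;4;9;12;3;1;10;0;6;2;8]; [::4;7;3;10;11;2;9;1;8;0;5;12;6]];
  [:: [::7;4;2;10;11;8;1;5;12;0;3;6;9]; [::5;8;2;6;12;4;10;3;9;11;0;1;7]; [::12;2;9;1;7;10;0;8;6;3;5;11;4]];
  [:: [::6;4;8;5;1;11;3;9;7;2;0;12;10]; [::9;6;11;4;1;7;0;5;2;12;3;8;10]; [::2;9;5;12;8;1;3;6;0;11;7;4;10]];
  [:: [::8;3;10;6;12;11;9;2;7;0;5;4;1]; [::12;5;2;8;4;10;11;1;7;3;9;6;0]; [::5;10;12;0;11;6;2;4;9;1;8;3;7]];
  [:: [::4;1;8;5;10;6;12;2;7;0;11;9;3]; [::6;0;11;10;7;3;12;9;2;4;1;8;5]; [::12;11;7;4;9;1;10;2;6;8;0;3;5]];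
  [:: [::0;10;9;5;11;2;12;4;7;3;8;6;1]; [::8;12;3;6;1;7;5;2;10;11;9;0;4]; [::7;2;6;8;1;5;12;11;4;10;0;9;3]];
  [:: [::0;10;2;7;3;11;8;6;9;12;1;5;4]; [::12;6;0;8;1;5;11;4;10;7;9;2;3]; [::2;11;10;8;4;12;1;9;3;5;7;0;6]];
  [:: [::4;2;7;9;10;11;3;5;8;6;12;1;0]; [::10;6;12;11;4;9;2;0;7;5;3;1;8]; [::9;12;3;0;8;2;10;4;7;11;5;6;1]];
  [:: [::10;4;11;0;6;8;1;9;2;5;12;3;7]; [::10;2;11;1;3;6;4;0;7;12;8;5;9]; [::7;4;9;11;8;3;12;0;10;1;5;2;6]];
  [:: [::10;7;5;3;0;6;12;4;8;11;2;9;1]; [::4;11;2;12;1;5;10;3;8;0;6;9;7]; [::7;9;3;6;1;8;2;4;10;12;11;5;0]];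
  [:: [::12;5;7;0;3;10;9;1;11;2;6;8;4]; [::2;5;3;12;8;4;9;11;6;0;7;1;10]; [::8;5;0;4;12;7;11;10;1;6;3;2;9]];
  [:: [::9;5;12;11;4;6;0;2;7;3;1;8;10]; [::2;9;11;0;3;1;10;8;12;4;5;6;7]; [::12;7;5;3;6;8;1;4;10;9;2;0;11]];
  [:: [::11;4;1;10;3;5;8;2;7;0;9;12;6]; [::7;11;6;3;12;0;4;9;2;10;5;8;1]; [::2;6;10;0;5;9;1;11;8;12;7;3;4]];
  [:: [::6;9;11;7;5;12;2;10;3;8;0;4;1]; [::6;10;4;0;7;2;8;1;9;3;5;12;11]; [::3;7;12;10;9;4;8;0;11;5;2;6;1]];
  [:: [::3;7;9;2;10;0;11;6;4;1;8;5;12]; [::9;5;12;10;4;11;7;2;0;6;3;1;8]; [::9;3;11;8;12;4;0;7;5;10;2;6;1]];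
  [:: [::3;5;1;6;8;11;10;4;7;0;12;9;2]; [::12;10;2;8;3;11;7;5;0;4;1;9;6]; [::5;11;9;7;1;8;12;3;6;10;4;2;0]];
  [:: [::4;0;3;7;11;1;5;2;9;10;12;6;8]; [::3;10;2;11;0;7;4;6;12;8;1;5;9]; [::11;3;5;7;2;12;10;1;6;8;0;4;9]];
  [:: [::1;3;9;11;2;8;0;7;12;5;4;6;10]; [::2;0;6;4;8;11;12;9;1;10;3;5;7]; [::2;5;8;12;4;0;10;3;11;6;9;7;1]];
  [:: [::0;8;6;2;5;12;7;11;1;4;9;3;10]; [::9;11;0;3;8;5;1;10;12;6;7;4;2]; [::2;9;4;6;0;7;3;1;8;12;10;11;5]];
  [:: [::0;6;12;7;2;10;1;3;11;4;9;8;5]; [::10;3;12;11;9;7;5;2;6;8;1;0;4]; [::4;12;1;11;5;9;3;0;8;2;10;7;6]];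
  [:: [::2;12;11;4;7;1;6;9;5;8;0;3;10]; [::6;3;10;12;7;9;4;0;5;11;2;8;1]; [::10;6;4;8;3;12;5;7;11;2;1;0;9]];
  [:: [::8;4;10;7;9;6;12;11;3;0;2;5;1]; [::8;1;4;0;12;9;5;2;11;10;7;6;3]; [::9;1;3;10;12;7;11;4;6;2;5;8;0]];
  [:: [::3;0;8;2;6;11;1;12;5;7;4;10;9]; [::8;11;7;12;4;9;5;0;2;10;3;6;1]; [::6;1;4;7;0;10;5;8;3;9;2;12;11]];
  [:: [::10;0;5;3;1;7;9;11;4;12;6;2;8]; [::5;9;12;0;11;1;6;8;4;10;2;3;7]; [::6;12;8;2;10;7;4;0;3;9;5;1;11]];
  [:: [::8;12;3;6;2;5;9;1;10;0;4;7;11]; [::5;3;10;7;12;9;11;0;6;8;1;2;4]; [::6;12;10;9;7;5;1;4;8;11;3;0;2]];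
  [:: [::4;0;2;6;9;12;3;8;10;7;5;1;11]; [::5;9;10;1;12;0;3;11;2;8;4;7;6]; [::2;7;11;1;4;6;3;10;5;12;8;9;0]];
  [:: [::10;2;12;5;9;1;4;11;6;3;8;0;7]; [::3;0;4;9;7;1;6;8;12;11;5;10;2]; [::2;8;3;1;5;0;12;10;11;9;7;6;4]];
  [:: [::5;11;1;9;2;6;10;0;12;7;8;3;4]; [::6;0;8;11;4;10;1;3;5;9;12;7;2]; [::3;11;9;10;2;7;1;4;12;8;6;0;5]];
  [:: [::9;11;7;5;1;3;10;2;0;4;8;12;6]; [::9;1;4;12;6;0;8;2;11;3;5;7;10]; [::5;12;8;4;11;10;7;2;6;3;1;0;9]];
  [:: [::2;5;1;4;12;6;9;10;7;11;3;0;8]; [::2;8;4;9;5;11;1;10;0;12;3;7;6]; [::7;12;11;4;6;8;5;3;1;9;10;0;2]];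
  [:: [::6;10;12;4;8;1;3;7;0;11;5;9;2]; [::4;0;3;6;9;10;2;11;7;1;5;12;8]; [::4;11;8;6;0;5;12;3;9;2;10;1;7]];
  [:: [::10;2;6;1;11;5;8;0;12;3;7;4;9]; [::12;6;9;11;8;2;4;7;10;1;0;3;5]; [::12;4;8;3;9;7;11;0;6;10;1;2;5]];
  [:: [::11;7;3;12;0;6;2;5;8;1;9;4;10]; [::10;1;12;9;6;3;0;2;4;7;5;8;11]; [::12;8;0;10;2;7;9;4;6;11;5;3;1]];
  [:: [::3;8;2;12;11;1;10;9;5;7;0;6;4]; [::9;6;12;1;8;0;10;5;2;4;3;7;11]; [::0;2;9;12;8;4;7;10;11;5;3;6;1]]].

Definition witnesses_13_11 : seq (seq (seq nat)) := [::
  [:: [::6;3;1;4;10;12;11;7;5;2;0;8;9]; [::12;6;1;10;7;3;0;5;9;11;4;2;8]; [::2;11;0;7;4;8;1;9;12;3;10;5;6]];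
  [:: [::11;9;0;5;7;12;3;8;1;6;10;2;4]; [::5;8;2;7;4;6;11;1;10;3;9;0;12]; [::7;10;8;0;4;12;6;9;2;11;3;1;5]];
  [:: [::0;3;11;2;12;5;7;1;6;4;9;8;10]; [::7;4;0;8;11;1;5;10;12;9;2;6;3]; [::0;7;3;1;4;2;5;11;10;8;6;12;9]];
  [:: [::6;10;3;11;12;2;4;0;7;5;8;9;1]; [::4;7;2;9;11;8;1;3;0;12;10;6;5]; [::8;3;6;1;5;2;10;11;7;9;0;4;12]];
  [:: [::1;11;2;9;7;3;8;10;5;0;6;12;4]; [::12;1;9;6;3;10;2;5;11;0;4;8;7]; [::0;2;6;4;11;7;5;8;1;3;12;9;10]];
  [:: [::10;4;1;12;6;0;9;11;5;8;2;3;7]; [::4;0;2;7;3;8;6;1;9;12;11;10;5]; [::11;1;5;0;12;7;9;4;6;10;8;2;3]];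
  [:: [::1;4;10;6;2;11;9;7;3;5;12;0;8]; [::10;2;8;6;3;0;4;12;11;7;1;9;5]; [::2;9;1;8;3;11;5;10;12;7;0;6;4]];
  [:: [::0;6;3;8;10;12;2;11;1;4;7;5;9]; [::11;10;1;5;9;7;2;6;4;8;0;3;12]; [::1;7;5;3;10;2;8;11;4;12;6;9;0]];
  [:: [::5;9;11;4;12;0;3;8;1;7;2;6;10]; [::8;2;4;9;7;0;11;10;1;6;12;3;5]; [::7;5;10;2;9;6;0;4;1;12;3;11;8]]].

Definition witnesses_13_12 : seq (seq (seq nat)) := [::
  [:: [::12;5;10;6;1;9;3;7;4;2;8;0;11]; [::11;2;7;12;4;0;5;1;3;8;6;9;10]; [::12;1;4;9;0;6;11;7;10;3;5;2;8]]].

Definition witnesses (N L : nat) : seq (seq (seq nat)) :=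
  match N, L with
  | 10, 9 => witnesses_10_9
  | 11, 9 => witnesses_11_9
  | 11, 10 => witnesses_11_10
  | 12, 9 => witnesses_12_9
  | 12, 10 => witnesses_12_10
  | 12, 11 => witnesses_12_11
  | 13, 9 => witnesses_13_9
  | 13, 10 => witnesses_13_10
  | 13, 11 => witnesses_13_11
  | 13, 12 => witnesses_13_12
  | _, _ => [::]
  end.

Lemma witnesses_certified :
  all (fun N => all (fun L => certified N L (witnesses N L)) (iota 9 (N - 9))) (iota 10 4).
Proof. vm_cast_no_check (erefl true). Qed.

Lemma certified_witnesses N L :
  10 <= N <= 13 -> 9 <= L < N -> certified N L (witnesses N L).
Proof.
move=> /andP[N_ge N_le] /andP[L_ge L_lt].
move/allP: witnesses_certified => /(_ N); rewrite mem_iota N_ge /= => /(_ (leq_trans N_le _))/allP.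
by apply; [|rewrite mem_iota L_ge /=; lia].
Qed.

Theorem lemma4p1 (T : finType) (e : rel T) :
  simple_graph e ->
  10 <= #|T| <= 13 ->
  #|edge_set e| = #|T| - 1 ->
  ~ connected_graph e ->
  girth_ge e 9 ->
  placeable e 4.
Proof.
move=> [e_sym e_irr] N_range card_edges _ [[s cyc_s] girth].
have L_ge9 := girth s cyc_s; case/and3P: cyc_s => s_uniq _ s_cycle.
have L_gt2 : 2 < size s by apply: leq_trans L_ge9.
have /hasP[x0 _ _] : has predT s by rewrite has_predT; lia.
have := size_edge_codes x0 e_sym s_uniq s_cycle L_gt2.
rewrite -(card_edge_set x0 e_sym e_irr s_uniq) card_edges => count_edges.
have L_range : 9 <= size s < #|T| by lia.
have size_chords : size (graph_chords e s x0) = #|T|.-1 - size s by lia.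
have [ps ps_ok uniq_ps] := certifiedP (certified_witnesses N_range L_range)
  (filter_subseq _ _) size_chords.
exact: placeable_of_labels (@label_inj _ s) (label_lt s_uniq) ps_ok uniq_ps
  (label_edge_codes x0 e_sym e_irr s_uniq).
Qed.
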